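(* Let $v$ be a typical weight, let $T$ be an intrinsic operator on $\mathcal{H}(\mathbb{D})$ and let $X$ be an initial space. (i) Let $T:X\to H_v$ be bounded and for $N\in\mathbb{N}$ let $D_N=\{z\in\mathbb{D}:\|T^*K_z^H\|>N\}$. If $\lim_{N\to\infty}\sup_{z\in D_N}v(z)\|T^*K_z^H\|=0$, then $T:X\to H_v$ is compact. (ii) Let $T:X\to\mathcal{B}_v$ be bounded and for $N\in\mathbb{N}$ let $D_N=\{z\in\mathbb{D}:\|T^*K_{z,1}^{\mathcal{B}}\|>N\}$. If $\lim_{N\to\infty}\sup_{z\in D_N}v(z)\|T^*K_{z,1}^{\mathcal{B}}\|=0$, then $T:X\to\mathcal{B}_v$ is compact.
   Context: $\mathcal{H}(\mathbb{D})$ is the space of holomorphic functions on the unit disk $\mathbb{D}$ with the topology $\tau_{uc}$ of uniform convergence on compact subsets. A linear operator $T$ on $\mathcal{H}(\mathbb{D})$ is intrinsic if it maps $\tau_{uc}$-convergent sequences to $\tau_{uc}$-convergent sequences. An initial space is a Banach space $X\subset\mathcal{H}(\mathbb{D})$ containing the polynomials such that every sequence in the closed unit ball of $X$ has a subsequence converging in $\tau_{uc}$ to some function in $X$. A typical weight is a continuous radial $v:\mathbb{D}\to(0,1]$, non-increasing in $|z|$, with $v(z)\to0$ as $|z|\to1$. $H_v=\{f:\sup_z v(z)|f(z)|<\infty\}$ with that supremum as norm; $\mathcal{B}_v=\{f:\sup_z v(z)|f'(z)|<\infty\}$ with norm $|f(0)|+\sup_z v(z)|f'(z)|$. $K_z^H$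 is the point evaluation $g\mapsto g(z)$ on $H_v$, $K_{z,1}^{\mathcal{B}}$ the derivative point evaluation $g\mapsto g'(z)$ on $\mathcal{B}_v$, and $T^*$ the adjoint of $T:X\to H_v$ (resp. $\mathcal{B}_v$). *)

From Stdlib Require Import Reals.
From Coquelicot Require Import Coquelicot.
Open Scope R_scope.

(* Elements of H(D) are represented by functions C -> C; only their values on
   the open unit disk D matter. *)
Definition inD (z : C) : Prop := Cmod z < 1.

Definition holo (f : C -> C) : Prop :=
  forall z : C, inD z -> ex_derive (K := C_AbsRing) (V := C_NormedModule) f z.

Definition cderiv (f : C -> C) (z l : C) : Prop :=
  is_derive (K := C_AbsRing) (V := C_NormedModule) f z l.

Definition fminus (f g : C -> C) : C -> C := fun z => Cminus (f z) (g z).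
Definition flin (a : C) (f g : C -> C) : C -> C := fun z => Cplus (Cmult a (f z)) (g z).

(* tau_uc convergence: uniform convergence on compact subsets of D, i.e. on
   every closed disk {|z| <= r}, r < 1. *)
Definition uc_conv (fs : nat -> C -> C) (f : C -> C) : Prop :=
  forall r eps : R, 0 <= r < 1 -> 0 < eps ->
    exists N : nat, forall n : nat, (N <= n)%nat ->
      forall z : C, Cmod z <= r -> Cmod (Cminus (fs n z) (f z)) < eps.

Definition poly_fun (a : nat -> C) (n : nat) : C -> C :=
  fun z => sum_n (fun k => Cmult (a k) (pow_n z k)) n.

Definition linear_HD (T : (C -> C) -> (C -> C)) : Prop :=
  (forall f, holo f -> holo (T f)) /\
  (forall (a : C) f g, holo f -> holo g ->
     forall z, inD z -> T (flin a f g) z = flin a (T f) (T g) z).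

Definition intrinsic (T : (C -> C) -> (C -> C)) : Prop :=
  linear_HD T /\
  forall (fs : nat -> C -> C) (f : C -> C),
    (forall n, holo (fs n)) -> holo f -> uc_conv fs f ->
    exists h : C -> C, holo h /\ uc_conv (fun n => T (fs n)) h.

(* Banach space (Xs, nX) of holomorphic functions on D (over the scalars C),
   elements identified when they agree on D. *)
Definition banach_subspace_HD (Xs : (C -> C) -> Prop) (nX : (C -> C) -> R) : Prop :=
  (forall f, Xs f -> holo f) /\
  (forall f g, Xs f -> (forall z, inD z -> f z = g z) -> Xs g /\ nX g = nX f) /\
  Xs (fun _ => 0%C) /\
  (forall (a : C) f g, Xs f -> Xs g -> Xs (flin a f g)) /\
  (forall f, Xs f -> 0 <= nX f) /\
  (forall f, Xs f -> nX f = 0 -> forall z, inD z -> f z = 0%C) /\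
  (forall (a : C) f, Xs f -> nX (fun z => Cmult a (f z)) = Cmod a * nX f) /\
  (forall f g, Xs f -> Xs g -> nX (fun z => Cplus (f z) (g z)) <= nX f + nX g) /\
  (forall fs : nat -> C -> C, (forall n, Xs (fs n)) ->
     (forall eps, 0 < eps -> exists N, forall n m, (N <= n)%nat -> (N <= m)%nat ->
        nX (fminus (fs n) (fs m)) < eps) ->
     exists f, Xs f /\ is_lim_seq (fun n => nX (fminus (fs n) f)) 0).

Definition strict_incr (phi : nat -> nat) : Prop := forall n, (phi n < phi (S n))%nat.

Definition initial_space (Xs : (C -> C) -> Prop) (nX : (C -> C) -> R) : Prop :=
  banach_subspace_HD Xs nX /\
  (forall (a : nat -> C) (n : nat), Xs (poly_fun a n)) /\
  (forall fs : nat -> C -> C, (forall n, Xs (fs n) /\ nX (fs n) <= 1) ->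
     exists (phi : nat -> nat) (f : C -> C),
       strict_incr phi /\ Xs f /\ uc_conv (fun k => fs (phi k)) f).

Definition typical_weight (v : C -> R) : Prop :=
  (forall z, inD z -> continuous v z) /\
  (forall z, inD z -> 0 < v z <= 1) /\
  (forall z w, inD z -> inD w -> Cmod z = Cmod w -> v z = v w) /\
  (forall z w, inD w -> Cmod z <= Cmod w -> v w <= v z) /\
  (forall eps, 0 < eps -> exists r, 0 <= r < 1 /\
     forall z, inD z -> r < Cmod z -> v z < eps).

Definition in_Hv (v : C -> R) (f : C -> C) : Prop :=
  holo f /\ exists M, forall z, inD z -> v z * Cmod (f z) <= M.
Definition Hv_norm (v : C -> R) (f : C -> C) : R :=
  real (Lub_Rbar (fun x => exists z, inD z /\ x = v z * Cmod (f z))).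

Definition in_Bv (v : C -> R) (f : C -> C) : Prop :=
  holo f /\ exists M, forall z l, inD z -> cderiv f z l -> v z * Cmod l <= M.
Definition Bv_norm (v : C -> R) (f : C -> C) : R :=
  Cmod (f 0%C) +
  real (Lub_Rbar (fun x => exists z l, inD z /\ cderiv f z l /\ x = v z * Cmod l)).

Definition bounded_op (Xs : (C -> C) -> Prop) (nX : (C -> C) -> R)
    (Ys : (C -> C) -> Prop) (nY : (C -> C) -> R) (T : (C -> C) -> (C -> C)) : Prop :=
  (forall f, Xs f -> Ys (T f)) /\
  exists M, forall f, Xs f -> nY (T f) <= M * nX f.

Definition compact_op (Xs : (C -> C) -> Prop) (nX : (C -> C) -> R)
    (Ys : (C -> C) -> Prop) (nY : (C -> C) -> R) (T : (C -> C) -> (C -> C)) : Prop :=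
  forall fs : nat -> C -> C, (forall n, Xs (fs n) /\ nX (fs n) <= 1) ->
    exists (phi : nat -> nat) (g : C -> C),
      strict_incr phi /\ Ys g /\
      is_lim_seq (fun k => nY (fminus (T (fs (phi k))) g)) 0.

Definition dual_norm (Xs : (C -> C) -> Prop) (nX : (C -> C) -> R)
    (Lam : (C -> C) -> C -> Prop) : R :=
  real (Lub_Rbar (fun x => exists f c, Xs f /\ nX f <= 1 /\ Lam f c /\ x = Cmod c)).

(* T^* K_z^H : f |-> (T f)(z),  as a functional on X (relational form) *)
Definition adjT_KH (T : (C -> C) -> (C -> C)) (z : C) : (C -> C) -> C -> Prop :=
  fun f c => c = T f z.
(* T^* K_{z,1}^B : f |-> (T f)'(z) *)
Definition adjT_KB1 (T : (C -> C) -> (C -> C)) (z : C) : (C -> C) -> C -> Prop :=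
  fun f c => cderiv (T f) z c.

(* lim_{N->oo} sup_{z in D_N} v(z) * nrm(z) = 0, D_N = {z in D : nrm z > N},
   with sup of the empty set taken as 0 (all quantities are >= 0). *)
Definition sup_DN_tends_to_0 (v : C -> R) (nrm : C -> R) : Prop :=
  forall eps, 0 < eps -> exists N0 : nat, forall N : nat, (N0 <= N)%nat ->
    forall z, inD z -> INR N < nrm z -> v z * nrm z <= eps.

(* Let (f_k) lie in the unit ball of X. As X is initial, a subsequence converges in
   tau_uc to some f in X, and as T is intrinsic, T f_k -> T f in tau_uc (interleaving the
   sequence with f identifies the limit). Put g_k = f_k - f, so that |g_k| <= |f| + 1.
   On a disk |z| <= r, v(z) |T g_k(z)| is small by uniform convergence. For |z| > r,
   v(z) |T g_k(z)| <= v(z) |T^* K_z| |g_k|, and the hypothesis makes v(z) |T^* K_z| -> 0 as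
   |z| -> 1: where |T^* K_z| > N this is the assumption, elsewhere v(z) N is small because v
   vanishes at the boundary. For B_v the same argument runs with derivatives; their uniform
   convergence on compacta follows from the Cauchy estimate |F'(z)| <= 4 sup |F| / a on a
   square of half-side a, which comes from Goursat's theorem for rectangles by comparing the
   boundary integrals of (F(w) - F(z)) / (w - z)^2 over a large and a small square. *)

From Stdlib Require Import Reals Lra Lia FunctionalExtensionality.
From Coquelicot Require Import Coquelicot.
Open Scope R_scope.

(** * Complex derivatives *)

Lemma Cmod_le_Rabs_sum (z : C) : Cmod z <= Rabs (fst z) + Rabs (snd z).
Proof.
pose proof (Rabs_pos (fst z)); pose proof (Rabs_pos (snd z)).
apply Rsqr_incr_0_var; [|lra].
unfold Cmod; rewrite Rsqr_sqrt by nra; unfold Rsqr.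
rewrite <- (pow2_abs (fst z)), <- (pow2_abs (snd z)); nra.
Qed.

Lemma Rabs_fst_le_Cmod (z : C) : Rabs (fst z) <= Cmod z.
Proof. pose proof (Rmax_Cmod z); pose proof (Rmax_l (Rabs (fst z)) (Rabs (snd z))); lra. Qed.

Lemma Rabs_snd_le_Cmod (z : C) : Rabs (snd z) <= Cmod z.
Proof. pose proof (Rmax_Cmod z); pose proof (Rmax_r (Rabs (fst z)) (Rabs (snd z))); lra. Qed.

Lemma Cmod_le_add_sub (w z : C) : Cmod w <= Cmod z + Cmod (w - z).
Proof. replace w with (z + (w - z))%C at 1 by ring. apply Cmod_triangle. Qed.

Lemma Cmod_Ci_mul (u : C) : Cmod (Ci * u) = Cmod u.
Proof.
rewrite Cmod_mult; unfold Ci, Cmod; simpl.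
replace (0 * (0 * 1) + 1 * (1 * 1)) with 1 by ring; rewrite sqrt_1; ring.
Qed.

Lemma Cmod_RtoC_nonneg (k : R) : 0 <= k -> Cmod (RtoC k) = k.
Proof. intros Hk; rewrite Cmod_R; apply Rabs_pos_eq, Hk. Qed.

Lemma cderiv_approx f p l : cderiv f p l -> forall eta, 0 < eta ->
  exists del, 0 < del /\ forall w, Cmod (w - p) < del ->
    Cmod (f w - f p - l * (w - p)) <= eta * Cmod (w - p).
Proof.
intros [_ Hd] eta Heta.
destruct (Hd p (fun P H => H) (mkposreal _ Heta)) as [e He].
exists e; split; [apply cond_pos|].
intros w Hw; specialize (He w Hw); simpl in He.
replace (f w - f p - l * (w - p))%C with (minus (minus (f w) (f p)) (scal (minus w p) l)); [exact He|].
unfold minus, plus, opp, scal; simpl; unfold mult; simpl.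
change (f w + - f p + - ((w + - p) * l) = f w - f p - l * (w - p))%C; ring.
Qed.

Lemma cderiv_of_approx f p l :
  (forall eta, 0 < eta -> exists del, 0 < del /\ forall w, Cmod (w - p) < del ->
     Cmod (f w - f p - l * (w - p)) <= eta * Cmod (w - p)) ->
  cderiv f p l.
Proof.
intros H; split; [apply is_linear_scal_l|].
intros x Hx; apply (@is_filter_lim_locally_unique C_AbsRing (AbsRing_NormedModule C_AbsRing)) in Hx; subst x.
intros eps; destruct (H eps (cond_pos eps)) as [del [Hdel Hw]].
exists (mkposreal _ Hdel); intros w Hb; specialize (Hw w Hb).
unfold norm, minus, plus, opp, scal; simpl; unfold mult; simpl.
change (Cmod (f w + - f p + - ((w + - p) * l))%C <= eps * Cmod (w + - p)%C).
replace (f w + - f p + - ((w + - p) * l))%C with (f w - f p - l * (w - p))%C by ring; exact Hw.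
Qed.

(* Coquelicot's product rule needs [C] as a normed module over itself. *)
Lemma is_derive_of_cderiv f p l :
  cderiv f p l -> is_derive (K := C_AbsRing) (V := AbsRing_NormedModule C_AbsRing) f p l.
Proof. intros [_ Hd]; split; [apply is_linear_scal_l | exact Hd]. Qed.

Lemma cderiv_of_is_derive f p l :
  is_derive (K := C_AbsRing) (V := AbsRing_NormedModule C_AbsRing) f p l -> cderiv f p l.
Proof. intros [_ Hd]; split; [apply is_linear_scal_l | exact Hd]. Qed.

Lemma cderiv_continuous_along f l (g : R -> C) t0 : cderiv f (g t0) l ->
  (forall t, Cmod (g t - g t0) <= Rabs (t - t0)) ->
  @continuous R_UniformSpace C_R_NormedModule (fun t => f (g t)) t0.
Proof.
intros Hd Hg; apply (proj2 (filterlim_locally _ _)); intros eps.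
destruct (cderiv_approx f (g t0) l Hd 1 Rlt_0_1) as [d [Hd0 Happrox]].
pose proof (Cmod_ge_0 l).
set (del := Rmin d (eps / (Cmod l + 2))).
assert (Hdel : 0 < del).
{ apply Rmin_glb_lt; [lra|]; apply Rdiv_lt_0_compat; [apply cond_pos | lra]. }
exists (mkposreal _ Hdel); intros t Ht; simpl in Ht.
assert (Hsmall : Cmod (g t - g t0) < del).
{ eapply Rle_lt_trans; [apply Hg|]; exact Ht. }
assert (Hlt : Cmod (f (g t) - f (g t0)) < eps).
{ pose proof (Rmin_l d (eps / (Cmod l + 2))); pose proof (Rmin_r d (eps / (Cmod l + 2))).
  specialize (Happrox (g t) ltac:(unfold del in *; lra)).
  replace (f (g t) - f (g t0))%C with ((f (g t) - f (g t0) - l * (g t - g t0)) + l * (g t - g t0))%C by ring.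
  eapply Rle_lt_trans; [apply Cmod_triangle|]; rewrite Cmod_mult.
  pose proof (Cmod_ge_0 (g t - g t0)).
  assert (Cmod (g t - g t0) * (Cmod l + 2) < eps).
  { apply Rmult_lt_reg_r with (/ (Cmod l + 2)); [apply Rinv_0_lt_compat; lra|].
    rewrite Rmult_assoc, Rinv_r by lra; unfold del in *; lra. }
  nra. }
split; simpl; unfold AbsRing_ball, abs, minus, plus, opp; simpl.
- exact (Rle_lt_trans _ _ _ (Rabs_fst_le_Cmod _) Hlt).
- exact (Rle_lt_trans _ _ _ (Rabs_snd_le_Cmod _) Hlt).
Qed.

Lemma cderiv_ext_inD F G z l : (forall w, inD w -> F w = G w) -> inD z ->
  cderiv F z l -> cderiv G z l.
Proof.
intros HFG Hz Hd; apply cderiv_of_approx; intros eta Heta.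
destruct (cderiv_approx F z l Hd eta Heta) as [d [Hd0 Happrox]].
unfold inD in Hz.
exists (Rmin d (1 - Cmod z)); split; [apply Rmin_glb_lt; lra|].
intros w Hw; pose proof (Rmin_l d (1 - Cmod z)); pose proof (Rmin_r d (1 - Cmod z)).
assert (inD w) by (unfold inD; pose proof (Cmod_le_add_sub w z); lra).
rewrite <- !HFG by (auto; unfold inD; lra); apply Happrox; lra.
Qed.

Lemma cderiv_scal F z l k : cderiv F z l -> cderiv (fun w => k * F w)%C z (k * l)%C.
Proof.
intros Hd; apply cderiv_of_is_derive.
replace (k * l)%C with (plus (mult zero (F z)) (mult k l))
  by (unfold plus, mult, zero; simpl; ring).
apply (is_derive_mult (K := C_AbsRing) (fun _ => k) F).
- exact (is_derive_const (K := C_AbsRing) (V := AbsRing_NormedModule C_AbsRing) k z).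
- apply is_derive_of_cderiv, Hd.
- intros; apply Cmult_comm.
Qed.

Lemma cderiv_minus F G z a b : cderiv F z a -> cderiv G z b -> cderiv (fminus F G) z (a - b)%C.
Proof. apply (is_derive_minus (K := C_AbsRing) (V := C_NormedModule)). Qed.

Lemma holo_fminus F G : holo F -> holo G -> holo (fminus F G).
Proof.
intros HF HG z Hz; destruct (HF z Hz) as [a Ha], (HG z Hz) as [b Hb].
exists (a - b)%C; apply cderiv_minus; assumption.
Qed.

Lemma cderiv_inv_sub z w0 : w0 <> z ->
  cderiv (fun w => / (w - z))%C w0 (- (/ (w0 - z) * / (w0 - z)))%C.
Proof.
intros Hne; apply cderiv_of_approx; intros eta Heta.
set (u0 := (w0 - z)%C).
assert (Hu0 : u0 <> 0%C).
{ intros E; apply Hne; replace w0 with (u0 + z)%C by (unfold u0; ring); rewrite E; ring. }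
set (m := Cmod u0).
assert (Hm : 0 < m).
{ destruct (Cmod_ge_0 u0) as [H|H]; [exact H|]; symmetry in H; apply Cmod_eq_0 in H; contradiction. }
assert (Hm3 : 0 < m * m * m) by (repeat apply Rmult_lt_0_compat; lra).
exists (Rmin (m / 2) (eta * m * m * m / 2)); split.
{ apply Rmin_glb_lt; [lra|]; assert (0 < eta * m * m * m) by (repeat apply Rmult_lt_0_compat; lra); lra. }
intros w Hw; pose proof (Rmin_l (m / 2) (eta * m * m * m / 2)); pose proof (Rmin_r (m / 2) (eta * m * m * m / 2)).
set (e := Cmod (w - w0)) in *; set (u := (w - z)%C).
assert (Hu : m / 2 < Cmod u).
{ pose proof (Cmod_le_add_sub u0 u) as Htri.
  replace (u0 - u)%C with (- (w - w0))%C in Htri by (unfold u, u0; ring).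
  rewrite Cmod_opp in Htri; fold e m in Htri; lra. }
assert (Hu' : u <> 0%C) by (intros E; rewrite E, Cmod_0 in Hu; lra).
replace (/ u - / u0 - - (/ u0 * / u0) * (w - w0))%C with ((w - w0) * (w - w0) * / u * / u0 * / u0)%C
  by (replace (w - w0)%C with (u - u0)%C by (unfold u, u0; ring); field; split; assumption).
rewrite !Cmod_mult, !Cmod_inv by assumption; fold e m.
assert (He : 0 <= e) by apply Cmod_ge_0.
assert (Hiu : / Cmod u <= 2 / m).
{ apply Rle_trans with (/ (m / 2)); [apply Rinv_le_contravar; lra | right; field; lra]. }
assert (Hiu0 : 0 <= / Cmod u) by (apply Rlt_le, Rinv_0_lt_compat; lra).
assert (Him : 0 <= / m) by (apply Rlt_le, Rinv_0_lt_compat; lra).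
apply Rle_trans with (e * e * (2 / m) * / m * / m).
{ repeat apply Rmult_le_compat_r; try assumption; apply Rmult_le_compat_l; nra. }
replace (e * e * (2 / m) * / m * / m) with (e * (e * 2 / (m * m * m))) by (field; lra).
rewrite (Rmult_comm eta e); apply Rmult_le_compat_l; [assumption|].
apply Rmult_le_reg_r with (m * m * m); [assumption|].
unfold Rdiv; rewrite Rmult_assoc, Rinv_l by lra; lra.
Qed.

(** * Integrals along segments and boundaries of rectangles *)

Definition RIntC (g : R -> C) (a b : R) : C := @RInt C_R_CompleteNormedModule g a b.
Definition ex_RIntC (g : R -> C) (a b : R) : Prop := @ex_RInt C_R_NormedModule g a b.

Lemma norm_C_R (z : C) : @norm R_AbsRing C_R_NormedModule z = Cmod z.
Proof.
unfold norm; simpl; unfold prod_norm, Cmod; simpl; unfold norm; simpl; unfold abs; simpl.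
f_equal; rewrite !Rmult_1_r, <- !Rabs_mult, !Rabs_pos_eq; [reflexivity | nra | nra].
Qed.

Lemma RIntC_correct g a b : ex_RIntC g a b -> @is_RInt C_R_NormedModule g a b (RIntC g a b).
Proof. exact (@RInt_correct C_R_CompleteNormedModule g a b). Qed.

Lemma RIntC_unique g a b l : @is_RInt C_R_NormedModule g a b l -> RIntC g a b = l.
Proof. exact (@is_RInt_unique C_R_CompleteNormedModule g a b l). Qed.

Lemma ex_RIntC_continuous g a b : a <= b ->
  (forall t, a <= t <= b -> @continuous R_UniformSpace C_R_NormedModule g t) -> ex_RIntC g a b.
Proof.
intros Hab Hg; apply (@ex_RInt_continuous C_R_CompleteNormedModule).
intros t Ht; rewrite Rmin_left, Rmax_right in Ht by lra; apply Hg, Ht.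
Qed.

Lemma RIntC_norm_le g a b M : a <= b -> ex_RIntC g a b ->
  (forall t, a <= t <= b -> Cmod (g t) <= M) -> Cmod (RIntC g a b) <= (b - a) * M.
Proof.
intros Hab Hg HM; rewrite <- norm_C_R.
apply (@norm_RInt_le C_R_NormedModule g (fun _ => M) a b); [exact Hab | | apply RIntC_correct, Hg
  | apply (@is_RInt_const R_NormedModule)].
intros t Ht; rewrite norm_C_R; apply HM; lra.
Qed.

Lemma is_RIntC_Cmult g a b l k : @is_RInt C_R_NormedModule g a b l ->
  @is_RInt C_R_NormedModule (fun t => (k * g t)%C) a b (k * l)%C.
Proof.
intros H.
pose proof (@is_RInt_fct_extend_fst R_NormedModule R_NormedModule g a b l H) as H1.
pose proof (@is_RInt_fct_extend_snd R_NormedModule R_NormedModule g a b l H) as H2.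
pose proof (is_RInt_minus _ _ _ _ _ _ (is_RInt_scal _ _ _ (fst k) _ H1) (is_RInt_scal _ _ _ (snd k) _ H2)) as Hre.
pose proof (is_RInt_plus _ _ _ _ _ _ (is_RInt_scal _ _ _ (fst k) _ H2) (is_RInt_scal _ _ _ (snd k) _ H1)) as Him.
replace (k * l)%C with (minus (scal (fst k) (fst l)) (scal (snd k) (snd l)),
                        plus (scal (fst k) (snd l)) (scal (snd k) (fst l)))
  by (unfold minus, plus, opp, scal; simpl; unfold mult; reflexivity).
apply (@is_RInt_fct_extend_pair R_NormedModule R_NormedModule).
- eapply is_RInt_ext; [|exact Hre]; intros x _.
  unfold minus, plus, opp, scal; simpl; unfold mult; reflexivity.
- eapply is_RInt_ext; [|exact Him]; intros x _.
  unfold minus, plus, opp, scal; simpl; unfold mult; simpl; ring.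
Qed.

Lemma ex_RIntC_Cmult g a b k : ex_RIntC g a b -> ex_RIntC (fun t => (k * g t)%C) a b.
Proof. intros H; eexists; apply is_RIntC_Cmult, RIntC_correct, H. Qed.

Lemma RIntC_Cmult g a b k : ex_RIntC g a b -> RIntC (fun t => (k * g t)%C) a b = (k * RIntC g a b)%C.
Proof. intros H; apply RIntC_unique, is_RIntC_Cmult, RIntC_correct, H. Qed.

Lemma ex_RIntC_plus g h a b : ex_RIntC g a b -> ex_RIntC h a b -> ex_RIntC (fun t => (g t + h t)%C) a b.
Proof. intros Hg Hh; eexists; apply (@is_RInt_plus C_R_NormedModule); apply RIntC_correct; eassumption. Qed.

Lemma RIntC_plus g h a b : ex_RIntC g a b -> ex_RIntC h a b ->
  RIntC (fun t => (g t + h t)%C) a b = (RIntC g a b + RIntC h a b)%C.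
Proof. intros Hg Hh; apply RIntC_unique, (@is_RInt_plus C_R_NormedModule); apply RIntC_correct; assumption. Qed.

Lemma ex_RIntC_minus g h a b : ex_RIntC g a b -> ex_RIntC h a b -> ex_RIntC (fun t => (g t - h t)%C) a b.
Proof. intros Hg Hh; eexists; apply (@is_RInt_minus C_R_NormedModule); apply RIntC_correct; eassumption. Qed.

Lemma RIntC_minus g h a b : ex_RIntC g a b -> ex_RIntC h a b ->
  RIntC (fun t => (g t - h t)%C) a b = (RIntC g a b - RIntC h a b)%C.
Proof. intros Hg Hh; apply RIntC_unique, (@is_RInt_minus C_R_NormedModule); apply RIntC_correct; assumption. Qed.

Lemma ex_RIntC_const (k : C) a b : ex_RIntC (fun _ => k) a b.
Proof. exists (scal (b - a) k); apply (@is_RInt_const C_R_NormedModule). Qed.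

Lemma RIntC_const (k : C) a b : RIntC (fun _ => k) a b = ((b - a) * k)%C.
Proof.
rewrite (RIntC_unique _ _ _ _ (@is_RInt_const C_R_NormedModule a b k)).
unfold scal; simpl; unfold prod_scal; simpl; unfold scal; simpl; unfold mult; simpl.
apply injective_projections; simpl; ring.
Qed.

Lemma RIntC_Chasles g a b c : ex_RIntC g a b -> ex_RIntC g b c ->
  (RIntC g a b + RIntC g b c)%C = RIntC g a c.
Proof. exact (@RInt_Chasles C_R_CompleteNormedModule g a b c). Qed.

Lemma ex_RInt_fst_of_RIntC g a b : ex_RIntC g a b -> ex_RInt (fun t => fst (g t)) a b.
Proof. intros H; eexists; apply (@is_RInt_fct_extend_fst R_NormedModule R_NormedModule), RIntC_correct, H. Qed.

Lemma ex_RInt_snd_of_RIntC g a b : ex_RIntC g a b -> ex_RInt (fun t => snd (g t)) a b.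
Proof. intros H; eexists; apply (@is_RInt_fct_extend_snd R_NormedModule R_NormedModule), RIntC_correct, H. Qed.

Lemma fst_RIntC g a b : ex_RIntC g a b -> fst (RIntC g a b) = RInt (fun t => fst (g t)) a b.
Proof.
intros H; symmetry; apply is_RInt_unique.
apply (@is_RInt_fct_extend_fst R_NormedModule R_NormedModule), RIntC_correct, H.
Qed.

Lemma snd_RIntC g a b : ex_RIntC g a b -> snd (RIntC g a b) = RInt (fun t => snd (g t)) a b.
Proof.
intros H; symmetry; apply is_RInt_unique.
apply (@is_RInt_fct_extend_snd R_NormedModule R_NormedModule), RIntC_correct, H.
Qed.

Lemma is_RInt_id a b : is_RInt (fun x => x) a b ((b * b - a * a) / 2).
Proof.
replace ((b * b - a * a) / 2) with (minus (b * b / 2) (a * a / 2))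
  by (unfold minus, plus, opp; simpl; field).
apply (is_RInt_derive (fun x => x * x / 2)).
- intros x _; auto_derive; [exact I | field].
- intros x _; apply continuous_id.
Qed.

Lemma is_RInt_const_R (c a b : R) : is_RInt (fun _ => c) a b (c * (b - a)).
Proof.
replace (c * (b - a)) with (scal (b - a) c) by (unfold scal; simpl; unfold mult; simpl; ring).
apply (@is_RInt_const R_NormedModule).
Qed.

Lemma is_RIntC_hline y a b :
  @is_RInt C_R_NormedModule (fun x => ((x, y) : C)) a b (((b * b - a * a) / 2, y * (b - a)) : C).
Proof. apply (@is_RInt_fct_extend_pair R_NormedModule R_NormedModule); [apply is_RInt_id | apply is_RInt_const_R]. Qed.

Lemma is_RIntC_vline x a b :
  @is_RInt C_R_NormedModule (fun y => ((x, y) : C)) a b ((x * (b - a), (b * b - a * a) / 2) : C).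
Proof. apply (@is_RInt_fct_extend_pair R_NormedModule R_NormedModule); [apply is_RInt_const_R | apply is_RInt_id]. Qed.

Definition cdiff (f : C -> C) (p : C) : Prop := exists l, cderiv f p l.

Definition cdiff_on_rect (f : C -> C) (x0 x1 y0 y1 : R) : Prop :=
  forall x y, x0 <= x <= x1 -> y0 <= y <= y1 -> cdiff f (x, y).

Definition hside (f : C -> C) (y a b : R) : C := RIntC (fun x => f (x, y)) a b.
Definition vside (f : C -> C) (x a b : R) : C := RIntC (fun y => f (x, y)) a b.

(* The contour integral of [f] along the positively oriented boundary of [x0,x1] x [y0,y1]. *)
Definition bdry_int (f : C -> C) (x0 x1 y0 y1 : R) : C :=
  (hside f y0 x0 x1 + Ci * vside f x1 y0 y1 - hside f y1 x0 x1 - Ci * vside f x0 y0 y1)%C.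

Definition bdry_integrable (f : C -> C) (x0 x1 y0 y1 : R) : Prop :=
  ex_RIntC (fun x => f (x, y0)) x0 x1 /\ ex_RIntC (fun x => f (x, y1)) x0 x1 /\
  ex_RIntC (fun y => f (x0, y)) y0 y1 /\ ex_RIntC (fun y => f (x1, y)) y0 y1.

Definition on_rect_bdry (x0 x1 y0 y1 : R) (w : C) : Prop :=
  (x0 <= fst w <= x1 /\ (snd w = y0 \/ snd w = y1)) \/
  (y0 <= snd w <= y1 /\ (fst w = x0 \/ fst w = x1)).

Lemma cdiff_on_rect_sub f x0 x1 y0 y1 a0 a1 b0 b1 : cdiff_on_rect f x0 x1 y0 y1 ->
  x0 <= a0 -> a1 <= x1 -> y0 <= b0 -> b1 <= y1 -> cdiff_on_rect f a0 a1 b0 b1.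
Proof. intros Hf ? ? ? ? x y ? ?; apply Hf; lra. Qed.

Lemma ex_RIntC_hline f y a b : a <= b -> (forall x, a <= x <= b -> cdiff f (x, y)) ->
  ex_RIntC (fun x => f (x, y)) a b.
Proof.
intros Hab Hf; apply ex_RIntC_continuous; [exact Hab|]; intros t Ht.
destruct (Hf t Ht) as [l Hl]; apply (cderiv_continuous_along f l (fun x => (x, y))); [exact Hl|].
intros s; eapply Rle_trans; [apply Cmod_le_Rabs_sum|]; simpl.
replace (y + - y) with 0 by ring; rewrite Rabs_R0; unfold Rminus; lra.
Qed.

Lemma ex_RIntC_vline f x a b : a <= b -> (forall y, a <= y <= b -> cdiff f (x, y)) ->
  ex_RIntC (fun y => f (x, y)) a b.
Proof.
intros Hab Hf; apply ex_RIntC_continuous; [exact Hab|]; intros t Ht.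
destruct (Hf t Ht) as [l Hl]; apply (cderiv_continuous_along f l (fun y => (x, y))); [exact Hl|].
intros s; eapply Rle_trans; [apply Cmod_le_Rabs_sum|]; simpl.
replace (x + - x) with 0 by ring; rewrite Rabs_R0; unfold Rminus; lra.
Qed.

Lemma bdry_integrable_of_cdiff f x0 x1 y0 y1 : x0 <= x1 -> y0 <= y1 ->
  cdiff_on_rect f x0 x1 y0 y1 -> bdry_integrable f x0 x1 y0 y1.
Proof.
intros Hx Hy Hf; split; [|split; [|split]];
  [apply ex_RIntC_hline | apply ex_RIntC_hline | apply ex_RIntC_vline | apply ex_RIntC_vline];
  try assumption; intros; apply Hf; lra.
Qed.

Lemma bdry_integrable_minus f g x0 x1 y0 y1 :
  bdry_integrable f x0 x1 y0 y1 -> bdry_integrable g x0 x1 y0 y1 ->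
  bdry_integrable (fun w => f w - g w)%C x0 x1 y0 y1.
Proof.
intros (F1 & F2 & F3 & F4) (G1 & G2 & G3 & G4).
split; [|split; [|split]]; apply ex_RIntC_minus; assumption.
Qed.

Lemma bdry_integrable_Cmult k f x0 x1 y0 y1 :
  bdry_integrable f x0 x1 y0 y1 -> bdry_integrable (fun w => k * f w)%C x0 x1 y0 y1.
Proof. intros (F1 & F2 & F3 & F4); split; [|split; [|split]]; apply ex_RIntC_Cmult; assumption. Qed.

Lemma bdry_integrable_affine A B x0 x1 y0 y1 : bdry_integrable (fun w => A + B * w)%C x0 x1 y0 y1.
Proof.
assert (Hh : forall y, ex_RIntC (fun x => A + B * (x, y))%C x0 x1).
{ intros y; apply (ex_RIntC_plus (fun _ => A) (fun x => B * (x, y))%C x0 x1 (ex_RIntC_const A x0 x1)).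
  exact (ex_RIntC_Cmult _ _ _ B (ex_intro _ _ (is_RIntC_hline y x0 x1))). }
assert (Hv : forall x, ex_RIntC (fun y => A + B * (x, y))%C y0 y1).
{ intros x; apply (ex_RIntC_plus (fun _ => A) (fun y => B * (x, y))%C y0 y1 (ex_RIntC_const A y0 y1)).
  exact (ex_RIntC_Cmult _ _ _ B (ex_intro _ _ (is_RIntC_vline x y0 y1))). }
split; [|split; [|split]]; auto.
Qed.

Lemma bdry_int_minus f g x0 x1 y0 y1 :
  bdry_integrable f x0 x1 y0 y1 -> bdry_integrable g x0 x1 y0 y1 ->
  bdry_int (fun w => f w - g w)%C x0 x1 y0 y1 = (bdry_int f x0 x1 y0 y1 - bdry_int g x0 x1 y0 y1)%C.
Proof.
intros (F1 & F2 & F3 & F4) (G1 & G2 & G3 & G4); unfold bdry_int, hside, vside.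
rewrite !RIntC_minus by assumption; ring.
Qed.

Lemma bdry_int_Cmult k f x0 x1 y0 y1 : bdry_integrable f x0 x1 y0 y1 ->
  bdry_int (fun w => k * f w)%C x0 x1 y0 y1 = (k * bdry_int f x0 x1 y0 y1)%C.
Proof.
intros (F1 & F2 & F3 & F4); unfold bdry_int, hside, vside.
rewrite !RIntC_Cmult by assumption; ring.
Qed.

Lemma bdry_int_affine A B x0 x1 y0 y1 : bdry_int (fun w => A + B * w)%C x0 x1 y0 y1 = 0%C.
Proof.
assert (Hh : forall y a b, hside (fun w => A + B * w)%C y a b
                           = ((b - a) * A + B * ((((b * b - a * a) / 2)%R, (y * (b - a))%R) : C))%C).
{ intros y a b; unfold hside; cbv beta.
  pose proof (ex_intro _ _ (is_RIntC_hline y a b)) as Hline.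
  rewrite (RIntC_plus (fun _ => A) (fun x => B * (x, y))%C), RIntC_const,
    (RIntC_Cmult (fun x => ((x, y) : C))), (RIntC_unique _ _ _ _ (is_RIntC_hline y a b));
    [reflexivity | exact Hline | apply ex_RIntC_const | exact (ex_RIntC_Cmult _ _ _ B Hline)]. }
assert (Hv : forall x a b, vside (fun w => A + B * w)%C x a b
                           = ((b - a) * A + B * (((x * (b - a))%R, ((b * b - a * a) / 2)%R) : C))%C).
{ intros x a b; unfold vside; cbv beta.
  pose proof (ex_intro _ _ (is_RIntC_vline x a b)) as Hline.
  rewrite (RIntC_plus (fun _ => A) (fun y => B * (x, y))%C), RIntC_const,
    (RIntC_Cmult (fun y => ((x, y) : C))), (RIntC_unique _ _ _ _ (is_RIntC_vline x a b));
    [reflexivity | exact Hline | apply ex_RIntC_const | exact (ex_RIntC_Cmult _ _ _ B Hline)]. }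
unfold bdry_int; rewrite !Hh, !Hv; destruct A as [a1 a2], B as [b1 b2].
unfold Ci; apply injective_projections; simpl; field.
Qed.

Lemma bdry_int_split_x f x0 m x1 y0 y1 :
  bdry_integrable f x0 m y0 y1 -> bdry_integrable f m x1 y0 y1 ->
  bdry_int f x0 x1 y0 y1 = (bdry_int f x0 m y0 y1 + bdry_int f m x1 y0 y1)%C.
Proof.
intros (F1 & F2 & _) (G1 & G2 & _); unfold bdry_int, hside.
rewrite <- (RIntC_Chasles _ x0 m x1 F1 G1), <- (RIntC_Chasles _ x0 m x1 F2 G2); ring.
Qed.

Lemma bdry_int_split_y f x0 x1 y0 m y1 :
  bdry_integrable f x0 x1 y0 m -> bdry_integrable f x0 x1 m y1 ->
  bdry_int f x0 x1 y0 y1 = (bdry_int f x0 x1 y0 m + bdry_int f x0 x1 m y1)%C.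
Proof.
intros (_ & _ & F3 & F4) (_ & _ & G3 & G4); unfold bdry_int, vside.
rewrite <- (RIntC_Chasles _ y0 m y1 F3 G3), <- (RIntC_Chasles _ y0 m y1 F4 G4); ring.
Qed.

Lemma bdry_int_norm_le f x0 x1 y0 y1 M : x0 <= x1 -> y0 <= y1 -> bdry_integrable f x0 x1 y0 y1 ->
  (forall w, on_rect_bdry x0 x1 y0 y1 w -> Cmod (f w) <= M) ->
  Cmod (bdry_int f x0 x1 y0 y1) <= 2 * ((x1 - x0) + (y1 - y0)) * M.
Proof.
intros Hx Hy (F1 & F2 & F3 & F4) HM; unfold bdry_int, hside, vside.
assert (B1 : Cmod (RIntC (fun x => f (x, y0)) x0 x1) <= (x1 - x0) * M)
  by (apply RIntC_norm_le; auto; intros; apply HM; left; simpl; auto).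
assert (B2 : Cmod (RIntC (fun x => f (x, y1)) x0 x1) <= (x1 - x0) * M)
  by (apply RIntC_norm_le; auto; intros; apply HM; left; simpl; auto).
assert (B3 : Cmod (RIntC (fun y => f (x0, y)) y0 y1) <= (y1 - y0) * M)
  by (apply RIntC_norm_le; auto; intros; apply HM; right; simpl; auto).
assert (B4 : Cmod (RIntC (fun y => f (x1, y)) y0 y1) <= (y1 - y0) * M)
  by (apply RIntC_norm_le; auto; intros; apply HM; right; simpl; auto).
set (a := RIntC (fun x => f (x, y0)) x0 x1) in *; set (b := RIntC (fun y => f (x1, y)) y0 y1) in *.
set (c := RIntC (fun x => f (x, y1)) x0 x1) in *; set (d := RIntC (fun y => f (x0, y)) y0 y1) in *.
replace (a + Ci * b - c - Ci * d)%C with (a + Ci * b + - c + - (Ci * d))%C by ring.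
pose proof (Cmod_triangle (a + Ci * b + - c) (- (Ci * d))).
pose proof (Cmod_triangle (a + Ci * b) (- c)); pose proof (Cmod_triangle a (Ci * b)).
rewrite !Cmod_opp, !Cmod_Ci_mul in *; lra.
Qed.

Lemma bdry_int_approx_affine f x0 x1 y0 y1 p l eta : x0 <= x1 -> y0 <= y1 -> 0 <= eta ->
  bdry_integrable f x0 x1 y0 y1 ->
  (forall w, x0 <= fst w <= x1 -> y0 <= snd w <= y1 ->
     Cmod (f w - f p - l * (w - p)) <= eta * Cmod (w - p)) ->
  x0 <= fst p <= x1 -> y0 <= snd p <= y1 ->
  Cmod (bdry_int f x0 x1 y0 y1) <= 2 * ((x1 - x0) + (y1 - y0)) * (eta * ((x1 - x0) + (y1 - y0))).
Proof.
intros Hx Hy Heta Hf Happrox Hpx Hpy.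
set (A := (f p - l * p)%C).
replace (bdry_int f x0 x1 y0 y1) with (bdry_int (fun w => f w - (A + l * w))%C x0 x1 y0 y1)
  by (rewrite bdry_int_minus, bdry_int_affine by (auto; apply bdry_integrable_affine); ring).
apply bdry_int_norm_le; [assumption | assumption | apply bdry_integrable_minus, bdry_integrable_affine; assumption |].
intros w Hw.
assert (Hwr : x0 <= fst w <= x1 /\ y0 <= snd w <= y1) by (destruct Hw as [[? [-> | ->]] | [? [-> | ->]]]; lra).
replace (f w - (A + l * w))%C with (f w - f p - l * (w - p))%C by (unfold A; ring).
eapply Rle_trans; [apply Happrox; tauto|]; apply Rmult_le_compat_l; [assumption|].
eapply Rle_trans; [apply Cmod_le_Rabs_sum|]; destruct p as [px py], w as [wx wy]; simpl in *.
apply Rplus_le_compat; unfold Rabs; destruct Rcase_abs; lra.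
Qed.

(** * Goursat's theorem *)

Record rect := mkRect { rx0 : R; rx1 : R; ry0 : R; ry1 : R }.

Definition rect_ok (r : rect) : Prop := rx0 r <= rx1 r /\ ry0 r <= ry1 r.
Definition rect_int (f : C -> C) (r : rect) : C := bdry_int f (rx0 r) (rx1 r) (ry0 r) (ry1 r).
Definition cdiff_on (f : C -> C) (r : rect) : Prop := cdiff_on_rect f (rx0 r) (rx1 r) (ry0 r) (ry1 r).
Definition rect_size (r : rect) : R := (rx1 r - rx0 r) + (ry1 r - ry0 r).

Definition xmid (r : rect) : R := (rx0 r + rx1 r) / 2.
Definition ymid (r : rect) : R := (ry0 r + ry1 r) / 2.
Definition quad_ll (r : rect) : rect := mkRect (rx0 r) (xmid r) (ry0 r) (ymid r).
Definition quad_lr (r : rect) : rect := mkRect (xmid r) (rx1 r) (ry0 r) (ymid r).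
Definition quad_ul (r : rect) : rect := mkRect (rx0 r) (xmid r) (ymid r) (ry1 r).
Definition quad_ur (r : rect) : rect := mkRect (xmid r) (rx1 r) (ymid r) (ry1 r).

Definition half_sub (r s : rect) : Prop :=
  rx0 r <= rx0 s /\ rx1 s <= rx1 r /\ ry0 r <= ry0 s /\ ry1 s <= ry1 r /\
  rx1 s - rx0 s = (rx1 r - rx0 r) / 2 /\ ry1 s - ry0 s = (ry1 r - ry0 r) / 2.

Lemma rect_int_quadrisect f r : rect_ok r -> cdiff_on f r ->
  rect_int f r = (rect_int f (quad_ll r) + rect_int f (quad_lr r)
                  + rect_int f (quad_ul r) + rect_int f (quad_ur r))%C.
Proof.
intros [Hx Hy] Hf; unfold rect_int, quad_ll, quad_lr, quad_ul, quad_ur, xmid, ymid; simpl.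
set (m := (rx0 r + rx1 r) / 2); set (n := (ry0 r + ry1 r) / 2).
assert (Hm : rx0 r <= m <= rx1 r) by (unfold m; lra).
assert (Hn : ry0 r <= n <= ry1 r) by (unfold n; lra).
assert (Hint : forall a0 a1 b0 b1, rx0 r <= a0 <= a1 -> a1 <= rx1 r -> ry0 r <= b0 <= b1 -> b1 <= ry1 r ->
                 bdry_integrable f a0 a1 b0 b1).
{ intros a0 a1 b0 b1 ? ? ? ?; apply bdry_integrable_of_cdiff; try lra.
  apply (cdiff_on_rect_sub f (rx0 r) (rx1 r) (ry0 r) (ry1 r)); auto; lra. }
rewrite (bdry_int_split_x f (rx0 r) m (rx1 r)) by (apply Hint; lra).
rewrite (bdry_int_split_y f (rx0 r) m (ry0 r) n (ry1 r)) by (apply Hint; lra).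
rewrite (bdry_int_split_y f m (rx1 r) (ry0 r) n (ry1 r)) by (apply Hint; lra).
ring.
Qed.

Definition worst_quadrant (f : C -> C) (r : rect) : rect :=
  if Rle_dec (Cmod (rect_int f r) / 4) (Cmod (rect_int f (quad_ll r))) then quad_ll r else
  if Rle_dec (Cmod (rect_int f r) / 4) (Cmod (rect_int f (quad_lr r))) then quad_lr r else
  if Rle_dec (Cmod (rect_int f r) / 4) (Cmod (rect_int f (quad_ul r))) then quad_ul r else quad_ur r.

Lemma worst_quadrant_int_ge f r : rect_ok r -> cdiff_on f r ->
  Cmod (rect_int f r) / 4 <= Cmod (rect_int f (worst_quadrant f r)).
Proof.
intros Hr Hf; unfold worst_quadrant.
destruct Rle_dec as [|H1]; [assumption|]; destruct Rle_dec as [|H2]; [assumption|].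
destruct Rle_dec as [|H3]; [assumption|].
pose proof (rect_int_quadrisect f r Hr Hf) as Hq.
pose proof (Cmod_triangle (rect_int f (quad_ll r) + rect_int f (quad_lr r) + rect_int f (quad_ul r))
                          (rect_int f (quad_ur r))).
pose proof (Cmod_triangle (rect_int f (quad_ll r) + rect_int f (quad_lr r)) (rect_int f (quad_ul r))).
pose proof (Cmod_triangle (rect_int f (quad_ll r)) (rect_int f (quad_lr r))).
rewrite <- Hq in *; lra.
Qed.

Lemma worst_quadrant_half_sub f r : rect_ok r -> half_sub r (worst_quadrant f r).
Proof.
intros [Hx Hy]; unfold worst_quadrant.
repeat destruct Rle_dec; unfold half_sub, quad_ll, quad_lr, quad_ul, quad_ur, xmid, ymid; simpl; lra.
Qed.

Fixpoint nested_rects (f : C -> C) (r0 : rect) (k : nat) : rect :=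
  match k with O => r0 | S k => worst_quadrant f (nested_rects f r0 k) end.

Section NestedRects.
Variables (f : C -> C) (r0 : rect).
Hypotheses (Hr0 : rect_ok r0) (Hf : cdiff_on f r0).

Lemma nested_rects_spec k :
  rect_ok (nested_rects f r0 k) /\ cdiff_on f (nested_rects f r0 k) /\
  rect_size (nested_rects f r0 k) = rect_size r0 / 2 ^ k /\
  Cmod (rect_int f r0) <= Cmod (rect_int f (nested_rects f r0 k)) * 4 ^ k.
Proof.
induction k as [|k (Hok & Hdiff & Hsize & Hint)]; simpl.
- split; [exact Hr0|]; split; [exact Hf|]; split; [field | lra].
- pose proof (worst_quadrant_half_sub f _ Hok) as Hsub.
  pose proof (worst_quadrant_int_ge f _ Hok Hdiff).
  assert (0 < 4 ^ k) by (apply pow_lt; lra).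
  split; [unfold half_sub, rect_ok in *; lra|].
  split; [eapply cdiff_on_rect_sub; [exact Hdiff | ..]; unfold half_sub in Hsub; lra|].
  split; [|nra].
  transitivity (rect_size (nested_rects f r0 k) / 2).
  + unfold half_sub, rect_size in *; lra.
  + rewrite Hsize; field; apply pow_nonzero; lra.
Qed.

Lemma nested_rects_mono j m : (j <= m)%nat ->
  rx0 (nested_rects f r0 j) <= rx0 (nested_rects f r0 m) /\ rx1 (nested_rects f r0 m) <= rx1 (nested_rects f r0 j) /\
  ry0 (nested_rects f r0 j) <= ry0 (nested_rects f r0 m) /\ ry1 (nested_rects f r0 m) <= ry1 (nested_rects f r0 j).
Proof.
induction 1 as [|m _ IH]; [lra|].
destruct (nested_rects_spec m) as [Hok _].
pose proof (worst_quadrant_half_sub f _ Hok); simpl; unfold half_sub in *; lra.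
Qed.

Lemma nested_rects_common_point : exists p : C, forall k,
  rx0 (nested_rects f r0 k) <= fst p <= rx1 (nested_rects f r0 k) /\
  ry0 (nested_rects f r0 k) <= snd p <= ry1 (nested_rects f r0 k).
Proof.
assert (Hcross : forall j k, rx0 (nested_rects f r0 j) <= rx1 (nested_rects f r0 k) /\
                             ry0 (nested_rects f r0 j) <= ry1 (nested_rects f r0 k)).
{ intros j k.
  destruct (nested_rects_mono j (max j k) (Nat.le_max_l _ _)) as (? & _ & ? & _).
  destruct (nested_rects_mono k (max j k) (Nat.le_max_r _ _)) as (_ & ? & _ & ?).
  destruct (nested_rects_spec (max j k)) as [[? ?] _]; lra. }
destruct (completeness (fun x => exists k, x = rx0 (nested_rects f r0 k))) as [px [Hub Hlub]].
{ exists (rx1 r0); intros x [k ->]; apply (Hcross k O). }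
{ exists (rx0 r0), O; reflexivity. }
destruct (completeness (fun y => exists k, y = ry0 (nested_rects f r0 k))) as [py [Hub' Hlub']].
{ exists (ry1 r0); intros y [k ->]; apply (Hcross k O). }
{ exists (ry0 r0), O; reflexivity. }
exists (px, py); intros k; simpl; split; split.
- apply Hub; exists k; reflexivity.
- apply Hlub; intros x [j ->]; apply Hcross.
- apply Hub'; exists k; reflexivity.
- apply Hlub'; intros y [j ->]; apply Hcross.
Qed.

End NestedRects.

Lemma exists_pow2_lt S d : 0 <= S -> 0 < d -> exists k, S / 2 ^ k < d.
Proof.
intros HS Hd; destruct (archimed_cor1 (d / (S + 1))) as [n [Hn Hn0]].
{ apply Rdiv_lt_0_compat; lra. }
exists n.
assert (H2n : INR n <= 2 ^ n).
{ clear; induction n as [|n IH]; [simpl; lra|].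
  rewrite S_INR; simpl; pose proof (pow_R1_Rle 2 n ltac:(lra)); lra. }
assert (Hnpos : 0 < INR n) by (apply lt_0_INR; lia).
apply Rle_lt_trans with ((S + 1) / INR n).
- unfold Rdiv; apply Rmult_le_compat; try lra.
  + apply Rlt_le, Rinv_0_lt_compat, pow_lt; lra.
  + apply Rinv_le_contravar; lra.
- apply Rmult_lt_reg_r with (/ (S + 1)); [apply Rinv_0_lt_compat; lra|].
  replace ((S + 1) / INR n * / (S + 1)) with (/ INR n) by (field; lra).
  replace (d * / (S + 1)) with (d / (S + 1)) by reflexivity; exact Hn.
Qed.

Lemma rect_int_le_of_approx f r p l eta del : rect_ok r -> cdiff_on f r -> 0 <= eta ->
  rx0 r <= fst p <= rx1 r -> ry0 r <= snd p <= ry1 r -> rect_size r < del ->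
  (forall w, Cmod (w - p) < del -> Cmod (f w - f p - l * (w - p)) <= eta * Cmod (w - p)) ->
  Cmod (rect_int f r) <= 2 * eta * rect_size r ^ 2.
Proof.
intros [Hx Hy] Hf Heta Hpx Hpy Hsize Happrox.
replace (2 * eta * rect_size r ^ 2) with (2 * rect_size r * (eta * rect_size r)) by ring.
unfold rect_int, rect_size; apply bdry_int_approx_affine with p l; try assumption.
- apply bdry_integrable_of_cdiff; assumption.
- intros w Hwx Hwy; apply Happrox; eapply Rle_lt_trans; [apply Cmod_le_Rabs_sum|].
  assert (Habs : forall a b lo hi, lo <= a <= hi -> lo <= b <= hi -> Rabs (a - b) <= hi - lo)
    by (intros; unfold Rabs; destruct Rcase_abs; lra).
  pose proof (Habs _ _ _ _ Hwx Hpx); pose proof (Habs _ _ _ _ Hwy Hpy).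
  unfold rect_size in Hsize; simpl; unfold Rminus in *; lra.
Qed.

(* If the integral c were nonzero, the nested worst quadrants, of size s/2^k and integral at
   least c/4^k, would shrink to a point where f is differentiable, making the integral o(4^-k). *)
Lemma goursat f x0 x1 y0 y1 : x0 <= x1 -> y0 <= y1 -> cdiff_on_rect f x0 x1 y0 y1 ->
  bdry_int f x0 x1 y0 y1 = 0%C.
Proof.
intros Hx Hy Hf.
set (r0 := mkRect x0 x1 y0 y1).
assert (Hr0 : rect_ok r0) by (split; simpl; assumption).
change (rect_int f r0 = 0%C); change (cdiff_on f r0) in Hf.
apply Cmod_eq_0; destruct (Cmod_ge_0 (rect_int f r0)) as [Hc | E]; [exfalso | symmetry; exact E].
set (c := Cmod (rect_int f r0)) in Hc.
destruct (nested_rects_common_point f r0 Hr0 Hf) as [p Hp].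
destruct (Hf (fst p) (snd p) (proj1 (Hp O)) (proj2 (Hp O))) as [l Hl].
rewrite <- surjective_pairing in Hl.
set (s := rect_size r0).
assert (Hs : 0 <= s) by (unfold s, rect_size; simpl; lra).
set (eta := c / (4 * (s * s + 1))).
assert (Heta : 0 < eta) by (unfold eta; apply Rdiv_lt_0_compat; nra).
destruct (cderiv_approx f p l Hl eta Heta) as [del [Hdel Happrox]].
destruct (exists_pow2_lt s del Hs Hdel) as [k Hk].
destruct (nested_rects_spec f r0 Hr0 Hf k) as (Hok & Hkf & Hksize & Hkint).
pose proof (rect_int_le_of_approx f _ p l eta del Hok Hkf ltac:(lra) (proj1 (Hp k)) (proj2 (Hp k))
              ltac:(rewrite Hksize; exact Hk) Happrox) as Hbound.
rewrite Hksize in Hbound.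
assert (H2k : 0 < 2 ^ k) by (apply pow_lt; lra).
assert (c <= 2 * eta * s ^ 2).
{ eapply Rle_trans; [exact Hkint|].
  replace (4 ^ k) with (2 ^ k * 2 ^ k) by (rewrite <- Rpow_mult_distr; f_equal; ring).
  replace (2 * eta * s ^ 2) with (2 * eta * (s / 2 ^ k) ^ 2 * (2 ^ k * 2 ^ k)) by (field; lra).
  apply Rmult_le_compat_r; [nra | exact Hbound]. }
assert (2 * eta * s ^ 2 < c).
{ replace (2 * eta * s ^ 2) with (c * (s * s / (2 * (s * s + 1)))) by (unfold eta; field; nra).
  assert (s * s / (2 * (s * s + 1)) < 1).
  { apply Rmult_lt_reg_r with (2 * (s * s + 1)); [nra|].
    unfold Rdiv; rewrite Rmult_assoc, Rinv_l by nra; nra. }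
  nra. }
lra.
Qed.

(** * Cauchy estimates *)

Definition square_int (f : C -> C) (zx zy d : R) : C := bdry_int f (zx - d) (zx + d) (zy - d) (zy + d).

Definition cdiff_punctured (f : C -> C) (zx zy a : R) : Prop :=
  forall x y, zx - a <= x <= zx + a -> zy - a <= y <= zy + a -> ((x, y) : C) <> (zx, zy) -> cdiff f (x, y).

Lemma square_bdry_dist zx zy d w : 0 <= d ->
  on_rect_bdry (zx - d) (zx + d) (zy - d) (zy + d) w -> d <= Cmod (w - (zx, zy)) <= 2 * d.
Proof.
intros Hd Hw; destruct w as [x y]; unfold on_rect_bdry in Hw; simpl in Hw; split.
- destruct Hw as [[_ [-> | ->]] | [_ [-> | ->]]];
    [ eapply Rle_trans; [|apply Rabs_snd_le_Cmod] | eapply Rle_trans; [|apply Rabs_snd_le_Cmod]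
    | eapply Rle_trans; [|apply Rabs_fst_le_Cmod] | eapply Rle_trans; [|apply Rabs_fst_le_Cmod] ];
    simpl; unfold Rabs; destruct Rcase_abs; lra.
- eapply Rle_trans; [apply Cmod_le_Rabs_sum|]; simpl.
  destruct Hw as [[Hx [-> | ->]] | [Hy [-> | ->]]]; unfold Rabs; repeat destruct Rcase_abs; lra.
Qed.

Lemma bdry_integrable_punctured f zx zy a d : 0 < d <= a -> cdiff_punctured f zx zy a ->
  bdry_integrable f (zx - d) (zx + d) (zy - d) (zy + d).
Proof.
intros Hd Hf; split; [|split; [|split]];
  [apply ex_RIntC_hline | apply ex_RIntC_hline | apply ex_RIntC_vline | apply ex_RIntC_vline];
  try lra; intros t Ht; apply Hf; try lra; intros E; injection E; lra.
Qed.

(* Goursat on the four rectangles of the frame between the two squares. *)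
Lemma square_int_shrink f zx zy a d : 0 < d < a -> cdiff_punctured f zx zy a ->
  square_int f zx zy a = square_int f zx zy d.
Proof.
intros Hd Hf; unfold square_int.
assert (Hint : forall a0 a1 b0 b1, zx - a <= a0 <= a1 -> a1 <= zx + a -> zy - a <= b0 <= b1 -> b1 <= zy + a ->
                 (a1 < zx \/ zx < a0 \/ b1 < zy \/ zy < b0) -> cdiff_on_rect f a0 a1 b0 b1).
{ intros a0 a1 b0 b1 ? ? ? ? Hout x y ? ?; apply Hf; try lra; intros E; injection E; lra. }
assert (HintH : forall y a0 a1, y <> zy -> zy - a <= y <= zy + a -> zx - a <= a0 <= a1 -> a1 <= zx + a ->
                  ex_RIntC (fun x => f (x, y)) a0 a1).
{ intros y a0 a1 ? ? ? ?; apply ex_RIntC_hline; [lra|]; intros x ?; apply Hf; try lra; intros E; injection E; lra. }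
assert (HintV : forall x b0 b1, x <> zx -> zx - a <= x <= zx + a -> zy - a <= b0 <= b1 -> b1 <= zy + a ->
                  ex_RIntC (fun y => f (x, y)) b0 b1).
{ intros x b0 b1 ? ? ? ?; apply ex_RIntC_vline; [lra|]; intros y ?; apply Hf; try lra; intros E; injection E; lra. }
assert (Hsides : forall a0 a1 b0 b1, zx - a <= a0 <= a1 -> a1 <= zx + a -> zy - a <= b0 <= b1 -> b1 <= zy + a ->
                   b0 <> zy -> b1 <> zy -> a0 <> zx -> a1 <> zx -> bdry_integrable f a0 a1 b0 b1).
{ intros; split; [|split; [|split]]; [apply HintH | apply HintH | apply HintV | apply HintV]; lra. }
rewrite (bdry_int_split_x f (zx - a) (zx - d) (zx + a)), (bdry_int_split_x f (zx - d) (zx + d) (zx + a))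
  by (apply Hsides; lra).
rewrite (bdry_int_split_y f (zx - d) (zx + d) (zy - a) (zy - d) (zy + a)),
        (bdry_int_split_y f (zx - d) (zx + d) (zy - d) (zy + d) (zy + a)) by (apply Hsides; lra).
rewrite (goursat f (zx - a) (zx - d) (zy - a) (zy + a)), (goursat f (zx + d) (zx + a) (zy - a) (zy + a)),
        (goursat f (zx - d) (zx + d) (zy - a) (zy - d)), (goursat f (zx - d) (zx + d) (zy + d) (zy + a))
  by (try lra; apply Hint; lra).
ring.
Qed.

Lemma RInt_ge_const (g : R -> R) a b c : a <= b -> ex_RInt g a b ->
  (forall x, a < x < b -> c <= g x) -> (b - a) * c <= RInt g a b.
Proof.
intros Hab Hg Hc; eapply Rle_trans; [|apply (RInt_le (fun _ => c)); auto; apply ex_RInt_const].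
rewrite RInt_const; unfold scal; simpl; unfold mult; simpl; lra.
Qed.

Lemma RInt_le_const (g : R -> R) a b c : a <= b -> ex_RInt g a b ->
  (forall x, a < x < b -> g x <= c) -> RInt g a b <= (b - a) * c.
Proof.
intros Hab Hg Hc; eapply Rle_trans; [apply (RInt_le _ (fun _ => c)); auto; apply ex_RInt_const|].
rewrite RInt_const; unfold scal; simpl; unfold mult; simpl; lra.
Qed.

Lemma inv_2d_le_poisson t d : 0 < d -> Rabs t <= d -> / (2 * d) <= d / (t ^ 2 + d ^ 2).
Proof.
intros Hd Ht; assert (t * t <= d * d) by (unfold Rabs in Ht; destruct Rcase_abs in Ht; nra).
assert (0 < t ^ 2 + d ^ 2) by nra.
apply Rmult_le_reg_r with (2 * d * (t ^ 2 + d ^ 2)); [nra|].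
replace (/ (2 * d) * (2 * d * (t ^ 2 + d ^ 2))) with (t ^ 2 + d ^ 2) by (field; lra).
replace (d / (t ^ 2 + d ^ 2) * (2 * d * (t ^ 2 + d ^ 2))) with (2 * d * d) by (field; nra).
nra.
Qed.

Lemma snd_inv_sub x y zx zy :
  snd (/ (((x, y) : C) - (zx, zy)))%C = (zy - y) / ((x - zx) ^ 2 + (y - zy) ^ 2).
Proof. simpl; unfold Rminus, Rdiv; ring. Qed.

Lemma fst_inv_sub x y zx zy :
  fst (/ (((x, y) : C) - (zx, zy)))%C = (x - zx) / ((x - zx) ^ 2 + (y - zy) ^ 2).
Proof. simpl; unfold Rminus, Rdiv; ring. Qed.

(* The exact value is 2 pi; on each side the integrand is at least 1 / (2 d). *)
Lemma square_int_inv_sub_im zx zy d : 0 < d ->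
  4 <= snd (square_int (fun w => / (w - (zx, zy)))%C zx zy d).
Proof.
intros Hd; set (h := (fun w => / (w - (zx, zy)))%C).
assert (Hh : cdiff_punctured h zx zy d).
{ intros x y _ _ Hne; eexists; apply cderiv_inv_sub, Hne. }
destruct (bdry_integrable_punctured h zx zy d d ltac:(lra) Hh) as (E1 & E2 & E3 & E4).
assert (Hsnd : snd (square_int h zx zy d) =
   snd (hside h (zy - d) (zx - d) (zx + d)) + fst (vside h (zx + d) (zy - d) (zy + d))
   - snd (hside h (zy + d) (zx - d) (zx + d)) - fst (vside h (zx - d) (zy - d) (zy + d)))
  by (unfold square_int, bdry_int, Ci; simpl; ring).
unfold hside, vside in Hsnd.
rewrite Hsnd, !snd_RIntC, !fst_RIntC by assumption.
assert (Hpoisson : forall t c, c - d <= t <= c + d -> / (2 * d) <= d / ((t - c) ^ 2 + d ^ 2)).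
{ intros t c Ht; apply inv_2d_le_poisson; [lra|]; unfold Rabs; destruct Rcase_abs; lra. }
assert (Hlen : (zx + d - (zx - d)) * / (2 * d) = 1 /\ (zy + d - (zy - d)) * / (2 * d) = 1)
  by (split; field; lra).
assert (B1 : 1 <= RInt (fun t => snd (h (t, zy - d))) (zx - d) (zx + d)).
{ rewrite <- (proj1 Hlen); apply RInt_ge_const; [lra | apply ex_RInt_snd_of_RIntC, E1|].
  intros x Hx; unfold h; rewrite snd_inv_sub.
  replace (zy - (zy - d)) with d by ring; replace (zy - d - zy) with (- d) by ring.
  rewrite <- (Rsqr_pow2 (- d)), <- Rsqr_neg, Rsqr_pow2; apply Hpoisson; lra. }
assert (B2 : 1 <= RInt (fun t => fst (h (zx + d, t))) (zy - d) (zy + d)).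
{ rewrite <- (proj2 Hlen); apply RInt_ge_const; [lra | apply ex_RInt_fst_of_RIntC, E4|].
  intros y Hy; unfold h; rewrite fst_inv_sub.
  replace (zx + d - zx) with d by ring; rewrite Rplus_comm; apply Hpoisson; lra. }
assert (B3 : RInt (fun t => snd (h (t, zy + d))) (zx - d) (zx + d) <= - 1).
{ replace (- 1) with ((zx + d - (zx - d)) * - / (2 * d)) by (field; lra).
  apply RInt_le_const; [lra | apply ex_RInt_snd_of_RIntC, E2|].
  intros x Hx; unfold h; rewrite snd_inv_sub.
  replace (zy - (zy + d)) with (- d) by ring; replace (zy + d - zy) with d by ring.
  unfold Rdiv; rewrite Ropp_mult_distr_l_reverse; apply Ropp_le_contravar, Hpoisson; lra. }
assert (B4 : RInt (fun t => fst (h (zx - d, t))) (zy - d) (zy + d) <= - 1).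
{ replace (- 1) with ((zy + d - (zy - d)) * - / (2 * d)) by (field; lra).
  apply RInt_le_const; [lra | apply ex_RInt_fst_of_RIntC, E3|].
  intros y Hy; unfold h; rewrite fst_inv_sub.
  replace (zx - d - zx) with (- d) by ring.
  rewrite <- (Rsqr_pow2 (- d)), <- Rsqr_neg, Rsqr_pow2, Rplus_comm.
  unfold Rdiv; rewrite Ropp_mult_distr_l_reverse; apply Ropp_le_contravar, Hpoisson; lra. }
lra.
Qed.

Definition cauchy_quot (f : C -> C) (z : C) : C -> C :=
  fun w => ((f w - f z) * (/ (w - z) * / (w - z)))%C.

Lemma cdiff_cauchy_quot f z w : cdiff f w -> w <> z -> cdiff (cauchy_quot f z) w.
Proof.
intros [l Hl] Hne; eexists; apply cderiv_of_is_derive.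
apply (is_derive_mult (K := C_AbsRing) (fun w => (f w - f z)%C) (fun w => (/ (w - z) * / (w - z))%C)).
- apply (is_derive_minus (K := C_AbsRing) (V := AbsRing_NormedModule C_AbsRing) f (fun _ => f z)).
  + apply is_derive_of_cderiv, Hl.
  + apply is_derive_const.
- apply (is_derive_mult (K := C_AbsRing) (fun w => (/ (w - z))%C) (fun w => (/ (w - z))%C));
    [apply is_derive_of_cderiv, cderiv_inv_sub, Hne | apply is_derive_of_cderiv, cderiv_inv_sub, Hne
    | intros; apply Cmult_comm].
- intros; apply Cmult_comm.
Qed.

Lemma cauchy_quot_norm_le f z w B a : 0 < a -> a <= Cmod (w - z) ->
  Cmod (f w) <= B -> Cmod (f z) <= B -> Cmod (cauchy_quot f z w) <= 2 * B / (a * a).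
Proof.
intros Ha Hw Hfw Hfz; unfold cauchy_quot.
assert (Hne : (w - z)%C <> 0%C) by (intros E; rewrite E, Cmod_0 in Hw; lra).
rewrite !Cmod_mult, !Cmod_inv by assumption.
assert (Cmod (f w - f z) <= 2 * B) by (unfold Cminus; eapply Rle_trans; [apply Cmod_triangle|]; rewrite Cmod_opp; lra).
assert (/ Cmod (w - z) <= / a) by (apply Rinv_le_contravar; lra).
assert (0 <= / Cmod (w - z)) by (apply Rlt_le, Rinv_0_lt_compat; lra).
pose proof (Cmod_ge_0 (f w - f z)).
replace (2 * B / (a * a)) with (2 * B * (/ a * / a)) by (field; lra).
apply Rmult_le_compat; try assumption; [apply Rmult_le_pos; assumption | apply Rmult_le_compat; assumption].
Qed.

Lemma cauchy_quot_approx f z l w d eta : 0 < d -> 0 < eta -> d <= Cmod (w - z) ->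
  Cmod (f w - f z - l * (w - z)) <= eta * Cmod (w - z) ->
  Cmod (cauchy_quot f z w - l * / (w - z)) <= eta / d.
Proof.
intros Hd Heta Hw Happrox; unfold cauchy_quot.
assert (Hne : (w - z)%C <> 0%C) by (intros E; rewrite E, Cmod_0 in Hw; lra).
replace ((f w - f z) * (/ (w - z) * / (w - z)) - l * / (w - z))%C
  with ((f w - f z - l * (w - z)) * / (w - z) * / (w - z))%C by (field; assumption).
rewrite !Cmod_mult, !Cmod_inv by assumption.
set (m := Cmod (w - z)) in *.
assert (0 <= / m) by (apply Rlt_le, Rinv_0_lt_compat; lra).
apply Rle_trans with (eta * m * / m * / m); [apply Rmult_le_compat_r, Rmult_le_compat_r; assumption|].
replace (eta * m * / m * / m) with (eta / m) by (field; lra).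
unfold Rdiv; apply Rmult_le_compat_l; [lra | apply Rinv_le_contravar; lra].
Qed.

Section CauchyEstimate.
Variables (f : C -> C) (zx zy a B : R) (l : C).
Hypotheses (Ha : 0 < a) (Hf : cdiff_on_rect f (zx - a) (zx + a) (zy - a) (zy + a))
  (HB : forall x y, zx - a <= x <= zx + a -> zy - a <= y <= zy + a -> Cmod (f (x, y)) <= B)
  (Hl : cderiv f (zx, zy) l).

Let z : C := (zx, zy).

Lemma cdiff_punctured_cauchy_quot : cdiff_punctured (cauchy_quot f z) zx zy a.
Proof. intros x y Hx Hy Hne; apply cdiff_cauchy_quot; [apply Hf|]; assumption. Qed.

Lemma cdiff_punctured_inv_sub : cdiff_punctured (fun w => / (w - z))%C zx zy a.
Proof. intros x y _ _ Hne; eexists; apply cderiv_inv_sub, Hne. Qed.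

Lemma square_int_cauchy_quot_le : Cmod (square_int (cauchy_quot f z) zx zy a) <= 16 * B / a.
Proof.
eapply Rle_trans.
- apply (bdry_int_norm_le _ _ _ _ _ (2 * B / (a * a))); try lra.
  + apply (bdry_integrable_punctured _ zx zy a a); [lra | apply cdiff_punctured_cauchy_quot].
  + intros w Hw; destruct (square_bdry_dist zx zy a w ltac:(lra) Hw) as [Hdist _].
    assert (Hin : zx - a <= fst w <= zx + a /\ zy - a <= snd w <= zy + a)
      by (destruct Hw as [[? [-> | ->]] | [? [-> | ->]]]; lra).
    apply cauchy_quot_norm_le; try assumption; [destruct w; apply HB; tauto | apply HB; lra].
- right; field; lra.
Qed.

Lemma square_int_cauchy_quot_approx d eta : 0 < d <= a -> 0 < eta ->
  (forall w, Cmod (w - z) <= 2 * d -> Cmod (f w - f z - l * (w - z)) <= eta * Cmod (w - z)) ->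
  Cmod (square_int (fun w => cauchy_quot f z w - l * / (w - z))%C zx zy d) <= 8 * eta.
Proof.
intros Hd Heta Happrox.
assert (Hq := bdry_integrable_punctured _ zx zy a d Hd cdiff_punctured_cauchy_quot).
assert (Hh := bdry_integrable_punctured _ zx zy a d Hd cdiff_punctured_inv_sub).
eapply Rle_trans.
- apply (bdry_int_norm_le _ _ _ _ _ (eta / d)); try lra.
  + apply bdry_integrable_minus; [exact Hq | apply bdry_integrable_Cmult, Hh].
  + intros w Hw; destruct (square_bdry_dist zx zy d w ltac:(lra) Hw) as [Hlo Hhi].
    apply cauchy_quot_approx; [lra | lra | exact Hlo | apply Happrox, Hhi].
- right; field; lra.
Qed.

(* The quotient integrates over the small square as over the big one, and there it is within
   eta / d of l / (w - z), whose integral has modulus at least 4. *)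
Lemma cauchy_estimate_eta eta : 0 < eta -> 4 * Cmod l <= 16 * B / a + 8 * eta.
Proof.
intros Heta; destruct (cderiv_approx f z l Hl eta Heta) as [del [Hdel Happrox]].
set (d := Rmin (a / 2) (del / 4)).
assert (Hd : 0 < d <= a / 2 /\ d <= del / 4)
  by (unfold d; repeat split; [apply Rmin_glb_lt | apply Rmin_l | apply Rmin_r]; lra).
set (h := (fun w => / (w - z))%C).
assert (Hq := bdry_integrable_punctured _ zx zy a d ltac:(lra) cdiff_punctured_cauchy_quot).
assert (Hh := bdry_integrable_punctured _ zx zy a d ltac:(lra) cdiff_punctured_inv_sub).
assert (Hsplit : square_int (fun w => cauchy_quot f z w - l * / (w - z))%C zx zy d
                 = (square_int (cauchy_quot f z) zx zy d - l * square_int h zx zy d)%C).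
{ unfold square_int; rewrite bdry_int_minus; [| exact Hq | apply bdry_integrable_Cmult, Hh].
  rewrite bdry_int_Cmult; [reflexivity | exact Hh]. }
pose proof square_int_cauchy_quot_le as Hbig.
rewrite (square_int_shrink _ zx zy a d ltac:(lra) cdiff_punctured_cauchy_quot) in Hbig.
pose proof (square_int_cauchy_quot_approx d eta ltac:(lra) Heta) as Hsmall.
rewrite Hsplit in Hsmall.
assert (Hinv : 4 <= Cmod (square_int h zx zy d)).
{ eapply Rle_trans; [apply (square_int_inv_sub_im zx zy d); lra|].
  eapply Rle_trans; [apply Rle_abs | apply Rabs_snd_le_Cmod]. }
set (Iq := square_int (cauchy_quot f z) zx zy d) in *; set (Ih := square_int h zx zy d) in *.
assert (Cmod l * Cmod Ih <= Cmod Iq + Cmod (Iq - l * Ih)).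
{ pose proof (Cmod_triangle Iq (- (Iq - l * Ih))) as Htri.
  rewrite Cmod_opp in Htri; replace (Iq + - (Iq - l * Ih))%C with (l * Ih)%C in Htri by ring.
  rewrite Cmod_mult in Htri; exact Htri. }
pose proof (Cmod_ge_0 l).
assert (Cmod (Iq - l * Ih) <= 8 * eta).
{ apply Hsmall; intros w Hw; apply Happrox; lra. }
assert (4 * Cmod l <= Cmod l * Cmod Ih) by (rewrite Rmult_comm; apply Rmult_le_compat_l; assumption).
lra.
Qed.

Lemma cauchy_estimate : Cmod l <= 4 * B / a.
Proof.
apply le_epsilon; intros eps Heps.
pose proof (cauchy_estimate_eta (eps / 2) ltac:(lra)).
replace (16 * B / a) with (4 * (4 * B / a)) in * by (field; lra).
lra.
Qed.

End CauchyEstimate.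

Lemma cderiv_norm_le_of_disk_bound F r a del z l : holo F -> 0 < a -> r + 2 * a < 1 ->
  (forall w, Cmod w <= r + 2 * a -> Cmod (F w) <= del) ->
  Cmod z <= r -> cderiv F z l -> Cmod l <= 4 * del / a.
Proof.
intros HF Ha Hra Hdel Hz Hl; destruct z as [zx zy].
assert (Hsq : forall x y, zx - a <= x <= zx + a -> zy - a <= y <= zy + a -> Cmod ((x, y) : C) <= r + 2 * a).
{ intros x y Hx Hy; eapply Rle_trans; [apply (Cmod_le_add_sub _ (zx, zy))|].
  eapply Rle_trans; [apply Rplus_le_compat_r, Hz|]; apply Rplus_le_compat_l.
  eapply Rle_trans; [apply Cmod_le_Rabs_sum|]; simpl.
  unfold Rabs; repeat destruct Rcase_abs; lra. }
apply (cauchy_estimate F zx zy a del l); try assumption.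
- intros x y Hx Hy; apply HF; unfold inD; pose proof (Hsq x y Hx Hy); lra.
- intros x y Hx Hy; apply Hdel, Hsq; assumption.
Qed.

(* Cauchy estimate on squares of half-side (1 - r) / 4 around the points of the disk |z| <= r. *)
Lemma uc_conv_cderiv Fs F : (forall k, holo (Fs k)) -> holo F -> uc_conv Fs F ->
  forall r eps, 0 <= r < 1 -> 0 < eps -> exists N, forall k, (N <= k)%nat ->
    forall z l, Cmod z <= r -> cderiv (fminus (Fs k) F) z l -> Cmod l < eps.
Proof.
intros HFs HF Huc r eps Hr Heps.
set (a := (1 - r) / 4); set (del := eps * a / 8).
assert (Ha : 0 < a) by (unfold a; lra).
assert (Hdel : 0 < del) by (unfold del; apply Rdiv_lt_0_compat; [apply Rmult_lt_0_compat|]; lra).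
destruct (Huc (r + 2 * a) del ltac:(unfold a; lra) Hdel) as [N HN].
exists N; intros k Hk z l Hz Hl.
eapply Rle_lt_trans.
- apply (cderiv_norm_le_of_disk_bound (fminus (Fs k) F) r a del z l); try assumption.
  + apply holo_fminus; [apply HFs | exact HF].
  + unfold a; lra.
  + intros w Hw; apply Rlt_le, HN; assumption.
- unfold del; replace (4 * (eps * a / 8) / a) with (eps / 2) by (field; lra); lra.
Qed.

(** * Operators, norms and compactness *)

Lemma holo_const (c : C) : holo (fun _ => c).
Proof. intros z _; exists zero; apply (is_derive_const (K := C_AbsRing) (V := C_NormedModule)). Qed.

(* Interleaving the sequence with its limit forces the uc-limit of the images to be [T f]. *)
Lemma intrinsic_uc_conv T gs f : intrinsic T -> (forall k, holo (gs k)) -> holo f ->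
  uc_conv gs f -> uc_conv (fun k => T (gs k)) (T f).
Proof.
intros [_ HT] Hgs Hf Huc r eps Hr Heps.
set (s := fun n => if Nat.even n then gs (Nat.div2 n) else f).
assert (Hs : forall n, holo (s n)) by (intros n; unfold s; destruct (Nat.even n); auto).
assert (Hus : uc_conv s f).
{ intros r0 e0 Hr0 He0; destruct (Huc r0 e0 Hr0 He0) as [N HN].
  exists (2 * N)%nat; intros n Hn z Hz; unfold s; destruct (Nat.even n) eqn:Hev.
  - apply (HN (Nat.div2 n)); [|exact Hz].
    pose proof (Nat.div2_odd n) as Hdiv; destruct (Nat.odd n); simpl in Hdiv; lia.
  - unfold Cminus; rewrite Cplus_opp_r, Cmod_0; exact He0. }
destruct (HT s f Hs Hf Hus) as [h [_ Hh]].
destruct (Hh r (eps / 2) Hr ltac:(lra)) as [N HN].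
exists N; intros k Hk z Hz.
pose proof (HN (2 * k)%nat ltac:(lia) z Hz) as Heven.
pose proof (HN (2 * N + 1)%nat ltac:(lia) z Hz) as Hodd.
unfold s in Heven, Hodd; rewrite Nat.even_even, Nat.div2_double in Heven; rewrite Nat.even_odd in Hodd.
replace (T (gs k) z - T f z)%C with ((T (gs k) z - h z) + - (T f z - h z))%C by ring.
eapply Rle_lt_trans; [apply Cmod_triangle|]; rewrite Cmod_opp; lra.
Qed.

Section LinearOnHD.
Variable T : (C -> C) -> (C -> C).
Hypothesis HT : linear_HD T.

Lemma linear_HD_zero z : inD z -> T (fun _ => 0%C) z = 0%C.
Proof.
intros Hz; pose proof (proj2 HT 1%C _ _ (holo_const 0) (holo_const 0) z Hz) as H.
assert (E : flin 1 (fun _ => 0%C) (fun _ => 0%C) = (fun _ => 0%C))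
  by (apply functional_extensionality; intros w; unfold flin; ring).
rewrite E in H; unfold flin in H.
replace (T (fun _ => 0%C) z) with ((1 * T (fun _ => 0%C) z + T (fun _ => 0%C) z) - T (fun _ => 0%C) z)%C
  by ring.
rewrite <- H; ring.
Qed.

Lemma linear_HD_scal k g z : holo g -> inD z -> T (fun w => k * g w)%C z = (k * T g z)%C.
Proof.
intros Hg Hz; pose proof (proj2 HT k g _ Hg (holo_const 0) z Hz) as H.
assert (E : flin k g (fun _ => 0%C) = (fun w => k * g w)%C)
  by (apply functional_extensionality; intros w; unfold flin; ring).
rewrite E in H; rewrite H; unfold flin; rewrite linear_HD_zero by assumption; ring.
Qed.

Lemma linear_HD_fminus f g z : holo f -> holo g -> inD z -> T (fminus f g) z = (T f z - T g z)%C.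
Proof.
intros Hf Hg Hz; pose proof (proj2 HT (-1)%C g f Hg Hf z Hz) as H.
assert (E : flin (-1)%C g f = fminus f g)
  by (apply functional_extensionality; intros w; unfold flin, fminus; ring).
rewrite E in H; rewrite H; unfold flin; ring.
Qed.

End LinearOnHD.

Section BanachSubspace.
Variables (Xs : (C -> C) -> Prop) (nX : (C -> C) -> R).
Hypothesis HX : banach_subspace_HD Xs nX.

Lemma banach_holo f : Xs f -> holo f.
Proof. apply (proj1 HX). Qed.

Lemma banach_zero : Xs (fun _ => 0%C).
Proof. apply HX. Qed.

Lemma banach_norm_ge0 f : Xs f -> 0 <= nX f.
Proof. apply HX. Qed.

Lemma banach_norm_scal k g : Xs g -> nX (fun w => k * g w)%C = Cmod k * nX g.
Proof. apply HX. Qed.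

Lemma banach_scal k g : Xs g -> Xs (fun w => k * g w)%C.
Proof.
intros Hg; destruct HX as (_ & _ & Hzero & Hlin & _).
replace (fun w => k * g w)%C with (flin k g (fun _ => 0%C))
  by (apply functional_extensionality; intros w; unfold flin; ring).
apply Hlin; assumption.
Qed.

Lemma banach_fminus f g : Xs f -> Xs g -> Xs (fminus f g).
Proof.
intros Hf Hg; destruct HX as (_ & _ & _ & Hlin & _).
replace (fminus f g) with (flin (-1)%C g f)
  by (apply functional_extensionality; intros w; unfold flin, fminus; ring).
apply Hlin; assumption.
Qed.

Lemma banach_norm_fminus_le f g : Xs f -> Xs g -> nX (fminus f g) <= nX f + nX g.
Proof.
intros Hf Hg; destruct HX as (_ & _ & _ & _ & _ & _ & _ & Htri & _).
replace (fminus f g) with (fun z => f z + (fun w => (-1) * g w)%C z)%C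
  by (apply functional_extensionality; intros w; unfold fminus; simpl; ring).
eapply Rle_trans; [apply Htri; [assumption | apply banach_scal, Hg]|].
rewrite banach_norm_scal by assumption.
rewrite Cmod_R, Rabs_left by lra; lra.
Qed.

Lemma banach_norm_zero : nX (fun _ => 0%C) = 0.
Proof.
pose proof (banach_norm_scal 0%C (fun _ => 0%C) banach_zero) as H.
assert (E : (fun w : C => (0 * 0)%C) = (fun _ => 0%C))
  by (apply functional_extensionality; intros w; ring).
cbv beta in H; rewrite E, Cmod_0 in H; lra.
Qed.

End BanachSubspace.

Lemma Lub_Rbar_bounded (E : R -> Prop) x0 K : E x0 -> (forall x, E x -> x <= K) ->
  (forall x, E x -> x <= real (Lub_Rbar E)) /\ real (Lub_Rbar E) <= K.
Proof.
intros Hx0 HK; destruct (Lub_Rbar_correct E) as [Hub Hlub].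
assert (HK' : Rbar_le (Lub_Rbar E) K) by (apply Hlub; intros x Hx; apply HK, Hx).
revert Hub HK'; destruct (Lub_Rbar E) as [l | |]; simpl; intros Hub HK'.
- split; [intros x Hx; apply (Hub x Hx) | exact HK'].
- contradiction.
- destruct (Hub x0 Hx0).
Qed.

Lemma inD_0 : inD 0%C.
Proof. unfold inD; rewrite Cmod_0; lra. Qed.

Lemma Hv_norm_ge v F z : in_Hv v F -> inD z -> v z * Cmod (F z) <= Hv_norm v F.
Proof.
intros [_ [M HM]] Hz; apply (Lub_Rbar_bounded _ (v z * Cmod (F z)) M).
- exists z; split; [assumption | reflexivity].
- intros x [w [Hw ->]]; apply HM, Hw.
- exists z; split; [assumption | reflexivity].
Qed.

Lemma Hv_norm_le v F K : (forall z, inD z -> 0 <= v z) ->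
  (forall z, inD z -> v z * Cmod (F z) <= K) -> 0 <= Hv_norm v F <= K.
Proof.
intros Hv HK.
destruct (Lub_Rbar_bounded (fun x => exists z, inD z /\ x = v z * Cmod (F z)) (v 0%C * Cmod (F 0%C)) K)
  as [Hub HleK]; [exists 0%C; split; [apply inD_0 | reflexivity] | intros x [w [Hw ->]]; apply HK, Hw |].
split; [|exact HleK].
eapply Rle_trans; [|apply Hub; exists 0%C; split; [apply inD_0 | reflexivity]].
apply Rmult_le_pos; [apply Hv, inD_0 | apply Cmod_ge_0].
Qed.

Definition Bv_seminorm (v : C -> R) (F : C -> C) : R :=
  real (Lub_Rbar (fun x => exists z l, inD z /\ cderiv F z l /\ x = v z * Cmod l)).

Lemma Bv_norm_split v F : Bv_norm v F = Cmod (F 0%C) + Bv_seminorm v F.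
Proof. reflexivity. Qed.

Lemma Bv_seminorm_ge v F z l : in_Bv v F -> inD z -> cderiv F z l -> v z * Cmod l <= Bv_seminorm v F.
Proof.
intros [_ [M HM]] Hz Hl; apply (Lub_Rbar_bounded _ (v z * Cmod l) M).
- exists z, l; split; [|split]; [assumption | assumption | reflexivity].
- intros x (w & m & Hw & Hm & ->); apply HM; assumption.
- exists z, l; split; [|split]; [assumption | assumption | reflexivity].
Qed.

Lemma Bv_seminorm_le v F K : holo F -> (forall z, inD z -> 0 <= v z) ->
  (forall z l, inD z -> cderiv F z l -> v z * Cmod l <= K) -> 0 <= Bv_seminorm v F <= K.
Proof.
intros HF Hv HK; destruct (HF 0%C inD_0) as [l0 Hl0].
destruct (Lub_Rbar_bounded (fun x => exists z l, inD z /\ cderiv F z l /\ x = v z * Cmod l) (v 0%C * Cmod l0) K)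
  as [Hub HleK].
{ exists 0%C, l0; split; [|split]; [apply inD_0 | exact Hl0 | reflexivity]. }
{ intros x (w & m & Hw & Hm & ->); apply HK; assumption. }
split; [|exact HleK].
eapply Rle_trans; [|apply Hub; exists 0%C, l0; split; [|split]; [apply inD_0 | exact Hl0 | reflexivity]].
apply Rmult_le_pos; [apply Hv, inD_0 | apply Cmod_ge_0].
Qed.

Section DualNorm.
Variables (Xs : (C -> C) -> Prop) (nX : (C -> C) -> R) (Lam : (C -> C) -> C -> Prop).
Hypotheses (HX : banach_subspace_HD Xs nX)
  (Lam_zero : exists c0, Lam (fun _ => 0%C) c0)
  (Lam_bounded : exists K, forall f c, Xs f -> nX f <= 1 -> Lam f c -> Cmod c <= K)
  (Lam_scal : forall (k : R) g c, 0 < k -> Xs g -> Lam g c -> Lam (fun w => k * g w)%C (k * c)%C).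

Let E := fun x => exists f c, Xs f /\ nX f <= 1 /\ Lam f c /\ x = Cmod c.

Lemma dual_norm_spec : (forall x, E x -> x <= dual_norm Xs nX Lam) /\ 0 <= dual_norm Xs nX Lam.
Proof.
destruct Lam_zero as [c0 Hc0], Lam_bounded as [K HK].
assert (HE0 : E (Cmod c0)).
{ exists (fun _ => 0%C), c0; split; [|split; [|split]];
    [apply (banach_zero Xs nX HX) | rewrite (banach_norm_zero Xs nX HX); lra | exact Hc0 | reflexivity]. }
destruct (Lub_Rbar_bounded E (Cmod c0) K HE0) as [Hub _].
{ intros x (f & c & Hf & Hn & Hc & ->); apply (HK f); assumption. }
split; [exact Hub|]; eapply Rle_trans; [apply Cmod_ge_0 | apply Hub, HE0].
Qed.

(* Normalise [g] to [g / (nX g + e)], which lies in the unit ball, and let [e] go to 0. *)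
Lemma dual_norm_bound g c : Xs g -> Lam g c -> Cmod c <= dual_norm Xs nX Lam * nX g.
Proof.
intros Hg Hc; destruct dual_norm_spec as [Hub HS]; set (S := dual_norm Xs nX Lam) in *.
pose proof (banach_norm_ge0 Xs nX HX g Hg).
apply le_epsilon; intros e He.
set (d := e / (S + 1)); assert (Hd : 0 < d) by (unfold d; apply Rdiv_lt_0_compat; lra).
set (k := / (nX g + d)); assert (Hk : 0 < k) by (unfold k; apply Rinv_0_lt_compat; lra).
assert (Hel : Cmod (k * c)%C <= S).
{ apply Hub; exists (fun w => k * g w)%C, (k * c)%C; split; [|split; [|split]].
  - apply (banach_scal Xs nX HX), Hg.
  - rewrite (banach_norm_scal Xs nX HX), Cmod_RtoC_nonneg by (assumption || lra).
    unfold k; apply Rmult_le_reg_l with (nX g + d); [lra|].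
    rewrite <- Rmult_assoc, Rinv_r by lra; lra.
  - apply Lam_scal; assumption.
  - reflexivity. }
rewrite Cmod_mult, Cmod_RtoC_nonneg in Hel by lra.
assert (Cmod c <= S * (nX g + d)).
{ apply Rmult_le_reg_l with k; [assumption|].
  replace (k * (S * (nX g + d))) with S by (unfold k; field; lra); lra. }
assert (S * d <= e).
{ unfold d; apply Rmult_le_reg_r with (S + 1); [lra|].
  replace (S * (e / (S + 1)) * (S + 1)) with (S * e) by (field; lra); nra. }
nra.
Qed.

End DualNorm.

Lemma bounded_op_unit_ball Xs nX Ys nY T : bounded_op Xs nX Ys nY T ->
  (forall f, Xs f -> 0 <= nX f) ->
  exists K, forall f, Xs f -> nX f <= 1 -> nY (T f) <= K.
Proof.
intros [_ [M HM]] Hnn; exists (Rmax M 0); intros f Hf Hn.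
pose proof (HM f Hf); pose proof (Hnn f Hf); pose proof (Rmax_l M 0); pose proof (Rmax_r M 0); nra.
Qed.

Section AdjointNorms.
Variables (v : C -> R) (T : (C -> C) -> (C -> C)) (Xs : (C -> C) -> Prop) (nX : (C -> C) -> R) (z : C).
Hypotheses (HT : linear_HD T) (HX : banach_subspace_HD Xs nX) (Hvz : 0 < v z) (Hz : inD z).

Lemma adjT_KH_norm_bound : bounded_op Xs nX (in_Hv v) (Hv_norm v) T ->
  forall g, Xs g -> Cmod (T g z) <= dual_norm Xs nX (adjT_KH T z) * nX g.
Proof.
intros Hbd g Hg; apply (dual_norm_bound Xs nX (adjT_KH T z) HX); [| | | exact Hg | reflexivity].
- exists (T (fun _ => 0%C) z); reflexivity.
- destruct (bounded_op_unit_ball _ _ _ _ T Hbd (banach_norm_ge0 Xs nX HX)) as [K HK].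
  exists (K / v z); intros f c Hf Hn ->.
  apply Rmult_le_reg_l with (v z); [assumption|].
  replace (v z * (K / v z)) with K by (field; lra).
  eapply Rle_trans; [apply Hv_norm_ge; [apply Hbd, Hf | exact Hz] | apply HK; assumption].
- intros k g' c _ Hg' ->; unfold adjT_KH.
  rewrite (linear_HD_scal T HT) by (try apply (banach_holo Xs nX HX); assumption); reflexivity.
Qed.

Lemma adjT_KB1_norm_bound : bounded_op Xs nX (in_Bv v) (Bv_norm v) T ->
  forall g l, Xs g -> cderiv (T g) z l -> Cmod l <= dual_norm Xs nX (adjT_KB1 T z) * nX g.
Proof.
intros Hbd g l Hg Hl; apply (dual_norm_bound Xs nX (adjT_KB1 T z) HX); [| | | exact Hg | exact Hl].
- apply (proj1 HT _ (holo_const 0%C) z Hz).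
- destruct (bounded_op_unit_ball _ _ _ _ T Hbd (banach_norm_ge0 Xs nX HX)) as [K HK].
  exists (K / v z); intros f c Hf Hn Hc.
  apply Rmult_le_reg_l with (v z); [assumption|].
  replace (v z * (K / v z)) with K by (field; lra).
  pose proof (Bv_seminorm_ge v (T f) z c (proj1 Hbd f Hf) Hz Hc).
  pose proof (HK f Hf Hn); rewrite Bv_norm_split in *; pose proof (Cmod_ge_0 (T f 0%C)); lra.
- intros k g' c _ Hg' Hc; unfold adjT_KB1.
  apply (cderiv_ext_inD (fun w => k * T g' w)%C); [| exact Hz | apply cderiv_scal, Hc].
  intros w Hw; rewrite (linear_HD_scal T HT); [reflexivity | apply (banach_holo Xs nX HX), Hg' | exact Hw].
Qed.

End AdjointNorms.

Lemma sup_DN_tail v nrm : typical_weight v -> sup_DN_tends_to_0 v nrm ->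
  forall eps, 0 < eps -> exists r, 0 <= r < 1 /\ forall z, inD z -> r < Cmod z -> v z * nrm z <= eps.
Proof.
intros (_ & Hpos & _ & _ & Hsmall) Hsup eps Heps.
destruct (Hsup eps Heps) as [N0 HN0].
assert (HN : 0 < INR (S N0)) by (apply lt_0_INR; lia).
destruct (Hsmall (eps / INR (S N0)) ltac:(apply Rdiv_lt_0_compat; lra)) as [r [Hr Hrs]].
exists r; split; [exact Hr|]; intros z Hz Hzr.
destruct (Rlt_le_dec (INR (S N0)) (nrm z)) as [Hbig | Hle].
- apply (HN0 (S N0)); [lia | assumption | assumption].
- pose proof (Hrs z Hz Hzr); pose proof (proj1 (Hpos z Hz)).
  apply Rle_trans with (v z * INR (S N0)); [apply Rmult_le_compat_l; lra|].
  apply Rlt_le; replace eps with (eps / INR (S N0) * INR (S N0)) by (field; lra).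
  apply Rmult_lt_compat_r; assumption.
Qed.

Lemma compact_op_of_uc_conv Xs nX Ys nY T : initial_space Xs nX -> (forall f, Xs f -> Ys (T f)) ->
  (forall gs f, (forall k, Xs (gs k) /\ nX (gs k) <= 1) -> Xs f -> uc_conv gs f ->
     is_lim_seq (fun k => nY (fminus (T (gs k)) (T f))) 0) ->
  compact_op Xs nX Ys nY T.
Proof.
intros (_ & _ & Hext) HY Hlim fs Hfs.
destruct (Hext fs Hfs) as (phi & f & Hphi & Hf & Huc).
exists phi, (T f); split; [exact Hphi|]; split; [apply HY, Hf|].
apply Hlim; [intros k; apply Hfs | exact Hf | exact Huc].
Qed.

Section ImagesOfConvergentSequence.
Variables (v : C -> R) (T : (C -> C) -> (C -> C)) (Xs : (C -> C) -> Prop) (nX : (C -> C) -> R)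
  (gs : nat -> C -> C) (f : C -> C).
Hypotheses (Hv : typical_weight v) (HT : intrinsic T) (HX : banach_subspace_HD Xs nX)
  (Hgs : forall k, Xs (gs k) /\ nX (gs k) <= 1) (Hf : Xs f) (Huc : uc_conv gs f).

Lemma fminus_mem_norm_le k : Xs (fminus (gs k) f) /\ 0 <= nX (fminus (gs k) f) <= nX f + 1.
Proof.
pose proof (proj1 (Hgs k)); split; [apply (banach_fminus Xs nX HX); assumption|].
split; [apply (banach_norm_ge0 Xs nX HX), (banach_fminus Xs nX HX); assumption|].
pose proof (banach_norm_fminus_le Xs nX HX (gs k) f (proj1 (Hgs k)) Hf); pose proof (proj2 (Hgs k)); lra.
Qed.

Lemma images_fminus k w : inD w -> fminus (T (gs k)) (T f) w = T (fminus (gs k) f) w.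
Proof.
intros Hw; unfold fminus at 1; rewrite (linear_HD_fminus T (proj1 HT));
  [reflexivity | apply (banach_holo Xs nX HX), Hgs | apply (banach_holo Xs nX HX), Hf | exact Hw].
Qed.

Lemma images_uc_conv : uc_conv (fun k => T (gs k)) (T f).
Proof.
apply intrinsic_uc_conv; [exact HT | | apply (banach_holo Xs nX HX), Hf | exact Huc].
intros k; apply (banach_holo Xs nX HX), Hgs.
Qed.

Lemma Hv_norm_images_tendsto : bounded_op Xs nX (in_Hv v) (Hv_norm v) T ->
  sup_DN_tends_to_0 v (fun z => dual_norm Xs nX (adjT_KH T z)) ->
  is_lim_seq (fun k => Hv_norm v (fminus (T (gs k)) (T f))) 0.
Proof.
intros Hbd Hsup; pose proof Hv as (_ & Hpos & _).
apply is_lim_seq_spec; intros eps; pose proof (cond_pos eps) as Heps.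
pose proof (banach_norm_ge0 Xs nX HX f Hf).
set (C0 := nX f + 1).
destruct (sup_DN_tail v _ Hv Hsup (eps / (2 * C0))) as [r [Hr Htail]].
{ apply Rdiv_lt_0_compat; unfold C0; lra. }
destruct (images_uc_conv r (eps / 2) Hr ltac:(lra)) as [K HK].
exists K; intros k Hk.
destruct (fminus_mem_norm_le k) as [Hg Hng]; fold C0 in Hng.
assert (Hnorm : 0 <= Hv_norm v (fminus (T (gs k)) (T f)) <= eps / 2).
{ apply Hv_norm_le; [intros z Hz; apply Rlt_le, Hpos, Hz|].
  intros z Hz; destruct (Hpos z Hz) as [Hvz Hv1].
  destruct (Rle_dec (Cmod z) r) as [Hzr | Hzr].
  - pose proof (HK k Hk z Hzr); pose proof (Cmod_ge_0 (T (gs k) z - T f z)); unfold fminus; nra.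
  - rewrite images_fminus by exact Hz.
    pose proof (adjT_KH_norm_bound v T Xs nX z (proj1 HT) HX Hvz Hz Hbd _ Hg).
    pose proof (Htail z Hz ltac:(lra)).
    replace (eps / 2) with (eps / (2 * C0) * C0) by (field; unfold C0; lra).
    set (S := dual_norm Xs nX (adjT_KH T z)) in *.
    apply Rle_trans with (v z * S * nX (fminus (gs k) f)); [rewrite Rmult_assoc; apply Rmult_le_compat_l; lra|].
    apply Rle_trans with (eps / (2 * C0) * nX (fminus (gs k) f)); [apply Rmult_le_compat_r; lra|].
    apply Rmult_le_compat_l; [apply Rlt_le, Rdiv_lt_0_compat; unfold C0; lra | lra]. }
rewrite Rminus_0_r, Rabs_pos_eq; lra.
Qed.

Lemma Bv_norm_images_tendsto : bounded_op Xs nX (in_Bv v) (Bv_norm v) T ->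
  sup_DN_tends_to_0 v (fun z => dual_norm Xs nX (adjT_KB1 T z)) ->
  is_lim_seq (fun k => Bv_norm v (fminus (T (gs k)) (T f))) 0.
Proof.
intros Hbd Hsup; pose proof Hv as (_ & Hpos & _).
assert (Hholo : forall h, Xs h -> holo (T h)) by (intros h Hh; apply (proj1 (proj1 HT)), (banach_holo Xs nX HX), Hh).
apply is_lim_seq_spec; intros eps; pose proof (cond_pos eps) as Heps.
pose proof (banach_norm_ge0 Xs nX HX f Hf).
set (C0 := nX f + 1).
destruct (sup_DN_tail v _ Hv Hsup (eps / (3 * C0))) as [r [Hr Htail]].
{ apply Rdiv_lt_0_compat; unfold C0; lra. }
destruct (images_uc_conv r (eps / 3) Hr ltac:(lra)) as [K1 HK1].
destruct (uc_conv_cderiv (fun k => T (gs k)) (T f) (fun k => Hholo _ (proj1 (Hgs k))) (Hholo f Hf)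
            images_uc_conv r (eps / 3) Hr ltac:(lra)) as [K2 HK2].
exists (max K1 K2); intros k Hk.
destruct (fminus_mem_norm_le k) as [Hg Hng]; fold C0 in Hng.
assert (H0 : Cmod (fminus (T (gs k)) (T f) 0%C) < eps / 3).
{ apply (HK1 k ltac:(lia)); rewrite Cmod_0; lra. }
assert (Hsemi : 0 <= Bv_seminorm v (fminus (T (gs k)) (T f)) <= eps / 3).
{ apply Bv_seminorm_le; [apply holo_fminus; apply Hholo; [apply Hgs | exact Hf] | intros z Hz; apply Rlt_le, Hpos, Hz |].
  intros z l Hz Hl; destruct (Hpos z Hz) as [Hvz Hv1].
  destruct (Rle_dec (Cmod z) r) as [Hzr | Hzr].
  - pose proof (HK2 k ltac:(lia) z l Hzr Hl); pose proof (Cmod_ge_0 l); nra.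
  - assert (HlT : cderiv (T (fminus (gs k) f)) z l) by (apply (cderiv_ext_inD _ _ z l (images_fminus k)); assumption).
    pose proof (adjT_KB1_norm_bound v T Xs nX z (proj1 HT) HX Hvz Hz Hbd _ l Hg HlT).
    pose proof (Htail z Hz ltac:(lra)).
    replace (eps / 3) with (eps / (3 * C0) * C0) by (field; unfold C0; lra).
    set (S := dual_norm Xs nX (adjT_KB1 T z)) in *.
    apply Rle_trans with (v z * S * nX (fminus (gs k) f)); [rewrite Rmult_assoc; apply Rmult_le_compat_l; lra|].
    apply Rle_trans with (eps / (3 * C0) * nX (fminus (gs k) f)); [apply Rmult_le_compat_r; lra|].
    apply Rmult_le_compat_l; [apply Rlt_le, Rdiv_lt_0_compat; unfold C0; lra | lra]. }
rewrite Rminus_0_r, Bv_norm_split; pose proof (Cmod_ge_0 (fminus (T (gs k)) (T f) 0%C)).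
rewrite Rabs_pos_eq; lra.
Qed.

End ImagesOfConvergentSequence.

Theorem proposition3p1 (v : C -> R) (T : (C -> C) -> (C -> C))
    (Xs : (C -> C) -> Prop) (nX : (C -> C) -> R) :
  typical_weight v -> intrinsic T -> initial_space Xs nX ->
  (bounded_op Xs nX (in_Hv v) (Hv_norm v) T ->
   sup_DN_tends_to_0 v (fun z => dual_norm Xs nX (adjT_KH T z)) ->
   compact_op Xs nX (in_Hv v) (Hv_norm v) T) /\
  (bounded_op Xs nX (in_Bv v) (Bv_norm v) T ->
   sup_DN_tends_to_0 v (fun z => dual_norm Xs nX (adjT_KB1 T z)) ->
   compact_op Xs nX (in_Bv v) (Bv_norm v) T).
Proof.
intros Hv HT HX; pose proof (proj1 HX) as HXb; split; intros Hbd Hsup;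
  apply compact_op_of_uc_conv; try apply Hbd; try exact HX; intros gs f Hgs Hf Huc.
- exact (Hv_norm_images_tendsto v T Xs nX gs f Hv HT HXb Hgs Hf Huc Hbd Hsup).
- exact (Bv_norm_images_tendsto v T Xs nX gs f Hv HT HXb Hgs Hf Huc Hbd Hsup).
Qed.
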